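(* Let $J\subset\mathbb{C}$ be a $C^1$ Jordan curve, i.e. $J=\gamma(\mathbb{R}/2\pi\mathbb{Z})$ for an injective $C^1$ map $\gamma:\mathbb{R}/2\pi\mathbb{Z}\to\mathbb{C}$ with $\gamma'\neq0$, and let $n\ge3$. Let \[ W=\Big\{(a_1,\dots,a_n)\in\mathbb{R}_{+}^n:\ a_i<\sum\nolimits_{j\ne i}a_j \text{ for } i=1,\dots,n\Big\}. \] Then for every $A_0\in J$ (reparametrize so that $\gamma(0)=A_0$) and for Lebesgue-almost every $(a_1,\dots,a_n)\in W$, the set of tuples $(\sigma_1,\dots,\sigma_{n-1},\lambda)$ with $0<\sigma_1<\dots<\sigma_{n-1}<2\pi$, $\lambda>0$ and \[ |\gamma(\sigma_i)-\gamma(\sigma_{i-1})|=\lambda a_i\quad (i=1,\dots,n),\qquad \sigma_0=0,\ \sigma_n=2\pi, \] is finite. That is, there are at most finitely many neatly $J$-cyclic polygons with starting vertex $A_0$ and side lengths $a_1,\dots,a_n$.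
   Context: A polygon $Q_n=A_0\cdots A_{n-1}$ is neatly $J$-cyclic (for an oriented Jordan curve $J$) if it has a similar copy whose vertices lie on $J$ in this order according to the orientation of $J$; here its starting vertex on $J$ is required to be $A_0$. *)

(* concrete reals R. The plane C is modelled as R x R,
   a curve gamma as its two coordinate functions gx, gy : R -> R. *)
From Stdlib Require Import Reals Lra List.
Open Scope R_scope.

Definition C1_jordan_param (gx gy gx' gy' : R -> R) : Prop :=
  (forall t, derivable_pt_lim gx t (gx' t)) /\
  (forall t, derivable_pt_lim gy t (gy' t)) /\
  continuity gx' /\ continuity gy' /\
  (forall t, gx' t <> 0 \/ gy' t <> 0) /\
  (forall t, gx (t + 2 * PI) = gx t /\ gy (t + 2 * PI) = gy t) /\
  (forall s t, 0 <= s < 2 * PI -> 0 <= t < 2 * PI ->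
     gx s = gx t -> gy s = gy t -> s = t).

Definition gdist (gx gy : R -> R) (s t : R) : R :=
  sqrt ((gx s - gx t) ^ 2 + (gy s - gy t) ^ 2).

(* Side lengths (a_1,...,a_n) are stored as a 0, ..., a (n-1).
   W = positive vectors satisfying the strict polygon inequalities. *)
Fixpoint sum_first (n : nat) (a : nat -> R) : R :=
  match n with O => 0 | S m => sum_first m a + a m end.

Definition in_W (n : nat) (a : nat -> R) : Prop :=
  (forall i, (i < n)%nat -> 0 < a i) /\
  (forall i, (i < n)%nat -> a i < sum_first n a - a i).

(* Lebesgue null sets in R^n (a vector = first n coordinates of a
   function nat -> R): for every eps > 0, a countable family of closed
   boxes covering the set with total volume <= eps. *)
Fixpoint prod_first (n : nat) (f : nat -> R) : R :=
  match n with O => 1 | S m => prod_first m f * f m end.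

Fixpoint sum_boxes (m : nat) (v : nat -> R) : R :=
  match m with O => 0 | S k => sum_boxes k v + v k end.

Definition lebesgue_null (n : nat) (N : (nat -> R) -> Prop) : Prop :=
  forall eps, 0 < eps ->
    exists lo hi : nat -> nat -> R,
      (forall k i, lo k i <= hi k i) /\
      (forall v, N v -> exists k, forall i, (i < n)%nat ->
                                  lo k i <= v i <= hi k i) /\
      (forall m, sum_boxes m (fun k => prod_first n (fun i => hi k i - lo k i))
                 <= eps).

Definition neat_config (gx gy : R -> R) (n : nat) (a : nat -> R)
    (sigma : list R) (lam : R) : Prop :=
  length sigma = S n /\
  nth 0 sigma 0 = 0 /\ nth n sigma 0 = 2 * PI /\
  (forall i, (i < n)%nat -> nth i sigma 0 < nth (S i) sigma 0) /\
  0 < lam /\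
  (forall i, (i < n)%nat ->
     gdist gx gy (nth (S i) sigma 0) (nth i sigma 0) = lam * a i).

(* Encode a polygon of scale [lambda] by [x = (sigma_1, ..., sigma_(n-1), lambda^-2)]; the
   squared side lengths [a_i^2] are then the values of a C^1 map [F] at [x].

   The scale of a neatly cyclic polygon with sides [a] in [W] is bounded below: a polygon of
   tiny scale has all its vertices near [gamma(0)], where the curve is almost a straight
   segment, and a closed polygon inscribed there in cyclic order has one side almost as long
   as all the others together, against the strict polygon inequalities.  So only [x] in a
   compact cube matter.

   A Sard-type argument then shows that the values of [F] with infinitely many preimages in
   a cube form a null set: if [F x = F x'] for nearby [x <> x'], the derivative almost
   kills [x - x'], so [F] maps the small cube containing them into boxes of total volume
   much smaller than that of the cube; by pigeonhole every value with infinitely many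
   preimages comes from such a cube.  Pulling back by [a |-> a^2] and taking the union
   over the size of the cube gives the exceptional null set. *)

From Stdlib Require Import Reals Lra Lia ZArith List Classical IndefiniteDescription
  FunctionalExtensionality Rgeom.
Open Scope R_scope.

Lemma functional_choice2 {A B C : Type} (P : A -> B -> C -> Prop) :
  (forall a, exists b c, P a b c) -> exists f g, forall a, P a (f a) (g a).
Proof.
  intros H. destruct (functional_choice (fun a bc => P a (fst bc) (snd bc))) as [f Hf].
  { intros a. destruct (H a) as (b & c & Hbc). now exists (b, c). }
  now exists (fun a => fst (f a)), (fun a => snd (f a)).
Qed.

Lemma sum_boxes_le_prefix m m' v : (forall k, 0 <= v k) -> (m <= m')%nat ->
  sum_boxes m v <= sum_boxes m' v.
Proof. intros H Hm; induction Hm; [lra|]. simpl. specialize (H m0); lra. Qed.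

Lemma sum_boxes_add a b f :
  sum_boxes (a + b) f = sum_boxes a f + sum_boxes b (fun k => f (a + k)%nat).
Proof.
  induction b; simpl; [rewrite Nat.add_0_r; lra|].
  rewrite Nat.add_succ_r; simpl. rewrite IHb. lra.
Qed.

Lemma sum_boxes_ext m f g : (forall k, (k < m)%nat -> f k = g k) ->
  sum_boxes m f = sum_boxes m g.
Proof.
  induction m; intros H; simpl; auto.
  rewrite IHm by (intros; apply H; lia). now rewrite (H m) by lia.
Qed.

Lemma sum_boxes_le m f g : (forall k, (k < m)%nat -> f k <= g k) ->
  sum_boxes m f <= sum_boxes m g.
Proof.
  induction m; intros H; simpl; [lra|].
  assert (sum_boxes m f <= sum_boxes m g) by (apply IHm; intros; apply H; lia).
  specialize (H m ltac:(lia)); lra.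
Qed.

Lemma sum_boxes_const m V : sum_boxes m (fun _ => V) = INR m * V.
Proof. induction m; cbn [sum_boxes]; [simpl; ring|]. rewrite IHm, S_INR; ring. Qed.

Lemma sum_boxes_scal m c f : sum_boxes m (fun k => c * f k) = c * sum_boxes m f.
Proof. induction m; simpl; [ring| rewrite IHm; ring]. Qed.

Lemma sum_boxes_geometric eps J :
  sum_boxes J (fun j => eps / 2 ^ S j) = eps - eps / 2 ^ J.
Proof.
  induction J; cbn [sum_boxes]; [simpl; field|].
  rewrite IHJ. simpl. field. apply pow_nonzero; lra.
Qed.

Lemma prod_first_nonneg n f : (forall i, (i < n)%nat -> 0 <= f i) -> 0 <= prod_first n f.
Proof.
  induction n; intros H; simpl; [lra|].
  apply Rmult_le_pos; [apply IHn; intros; apply H; lia| apply H; lia].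
Qed.

Lemma prod_first_le_pow n f c : (forall i, (i < n)%nat -> 0 <= f i <= c) ->
  prod_first n f <= c ^ n.
Proof.
  induction n; intros H; simpl; [lra|].
  rewrite (Rmult_comm c). apply Rmult_le_compat.
  - apply prod_first_nonneg; intros; apply H; lia.
  - apply H; lia.
  - apply IHn; intros; apply H; lia.
  - apply H; lia.
Qed.

Lemma prod_first_le_scale n f g c : 0 <= c ->
  (forall i, (i < n)%nat -> 0 <= f i <= c * g i) ->
  prod_first n f <= c ^ n * prod_first n g.
Proof.
  intros Hc. induction n; intros H; simpl; [lra|].
  assert (IH : prod_first n f <= c ^ n * prod_first n g) by (apply IHn; intros; apply H; lia).
  assert (0 <= prod_first n f) by (apply prod_first_nonneg; intros; apply H; lia).
  specialize (H n ltac:(lia)).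
  replace (c * c ^ n * (prod_first n g * g n)) with ((c ^ n * prod_first n g) * (c * g n)) by ring.
  apply Rmult_le_compat; lra.
Qed.

Lemma sum_first_le n f g : (forall i, (i < n)%nat -> f i <= g i) ->
  sum_first n f <= sum_first n g.
Proof.
  induction n; intros H; simpl; [lra|].
  assert (sum_first n f <= sum_first n g) by (apply IHn; intros; apply H; lia).
  specialize (H n ltac:(lia)). lra.
Qed.

Lemma sum_first_le_prefix n m f : (forall i, (i < n)%nat -> 0 <= f i) -> (m <= n)%nat ->
  sum_first m f <= sum_first n f.
Proof.
  intros H Hmn; induction Hmn; [lra|]. simpl.
  assert (0 <= f m0) by (apply H; lia).
  assert (sum_first m f <= sum_first m0 f) by (apply IHHmn; intros; apply H; lia). lra.
Qed.

Lemma sum_first_telescope n g : sum_first n (fun i => g (S i) - g i) = g n - g O.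
Proof. induction n; simpl; [ring| rewrite IHn; ring]. Qed.

Lemma sum_first_scal n c f : sum_first n (fun i => c * f i) = c * sum_first n f.
Proof. induction n; simpl; [ring| rewrite IHn; ring]. Qed.

Lemma sum_first_remove n f w : (w < n)%nat ->
  sum_first n f = f w + sum_first n (fun i => if Nat.eqb i w then 0 else f i).
Proof.
  induction n; intros Hw; [lia|]. simpl.
  destruct (Nat.eq_dec w n) as [->|Hne].
  - rewrite Nat.eqb_refl.
    assert (E : forall m, (m <= n)%nat ->
      sum_first m (fun i => if Nat.eqb i n then 0 else f i) = sum_first m f).
    { induction m; intros Hm; simpl; [auto|]. rewrite IHm by lia.
      destruct (Nat.eqb_spec m n); [lia| auto]. }
    rewrite E by lia. ring.
  - rewrite IHn by lia. destruct (Nat.eqb_spec n w); [lia|]. ring.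
Qed.

(** * Null sets *)

Definition finite_null (n : nat) (N : (nat -> R) -> Prop) : Prop :=
  forall eps, 0 < eps ->
    exists (T : nat) (lo hi : nat -> nat -> R),
      (0 < T)%nat /\
      (forall k i, lo k i <= hi k i) /\
      (forall v, N v -> exists k, (k < T)%nat /\
                                  forall i, (i < n)%nat -> lo k i <= v i <= hi k i) /\
      sum_boxes T (fun k => prod_first n (fun i => hi k i - lo k i)) <= eps.

Section Blocks.
Variable T : nat -> nat.
Hypothesis T_pos : forall j, (1 <= T j)%nat.

(* Consecutive blocks of lengths [T 0], [T 1], ... enumerate the pairs [(j, l)], [l < T j]. *)
Fixpoint block_start_from (j0 J : nat) : nat :=
  match J with O => O | S J' => (T j0 + block_start_from (S j0) J')%nat end.

Fixpoint block_locate_from (fuel k j : nat) : nat * nat :=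
  match fuel with
  | O => (j, k)
  | S f => if Nat.ltb k (T j) then (j, k) else block_locate_from f (k - T j)%nat (S j)
  end.

Definition block_start := block_start_from 0.
Definition block_locate k := block_locate_from (S k) k 0.

Lemma block_start_from_S j0 J :
  block_start_from j0 (S J) = (block_start_from j0 J + T (j0 + J))%nat.
Proof.
  revert j0; induction J; intros j0; [simpl; rewrite !Nat.add_0_r; lia|].
  change (block_start_from j0 (S (S J))) with (T j0 + block_start_from (S j0) (S J))%nat.
  rewrite IHJ. simpl. rewrite Nat.add_succ_r. lia.
Qed.

Lemma block_start_from_ge j0 J : (J <= block_start_from j0 J)%nat.
Proof.
  revert j0; induction J; intros j0; simpl; [lia|].
  specialize (IHJ (S j0)); specialize (T_pos j0); lia.
Qed.

Lemma block_locate_from_start J : forall j0 l fuel, (l < T (j0 + J))%nat -> (J < fuel)%nat ->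
  block_locate_from fuel (block_start_from j0 J + l) j0 = ((j0 + J)%nat, l).
Proof.
  induction J; intros j0 l fuel Hl Hf; destruct fuel as [|f]; try lia; simpl.
  - rewrite Nat.add_0_r in Hl |- *. now rewrite (proj2 (Nat.ltb_lt _ _) Hl).
  - rewrite (proj2 (Nat.ltb_ge _ _)) by lia.
    replace (T j0 + block_start_from (S j0) J + l - T j0)%nat
      with (block_start_from (S j0) J + l)%nat by lia.
    rewrite IHJ; [f_equal; lia| rewrite Nat.add_succ_comm; auto| lia].
Qed.

Lemma block_locate_start J l : (l < T J)%nat -> block_locate (block_start J + l) = (J, l).
Proof.
  intros Hl. unfold block_locate, block_start.
  apply block_locate_from_start; [exact Hl|].
  pose proof (block_start_from_ge 0 J). lia.
Qed.

Lemma sum_boxes_blocks (V : nat -> nat -> R) J :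
  sum_boxes (block_start J) (fun k => V (fst (block_locate k)) (snd (block_locate k))) =
  sum_boxes J (fun j => sum_boxes (T j) (V j)).
Proof.
  induction J; [reflexivity|].
  unfold block_start. rewrite block_start_from_S, sum_boxes_add. simpl.
  fold block_start. rewrite IHJ. f_equal.
  apply sum_boxes_ext. intros k Hk. now rewrite block_locate_start.
Qed.
End Blocks.

Lemma lebesgue_null_countable_union n (N : nat -> (nat -> R) -> Prop) :
  (forall J, finite_null n (N J)) -> lebesgue_null n (fun v => exists J, N J v).
Proof.
  intros H eps Heps.
  assert (Hcov : forall J, exists c : nat * (nat -> nat -> R) * (nat -> nat -> R),
    let '(T, lo, hi) := c in
      (0 < T)%nat /\ (forall k i, lo k i <= hi k i) /\
      (forall v, N J v -> exists k, (k < T)%nat /\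
                                    forall i, (i < n)%nat -> lo k i <= v i <= hi k i) /\
      sum_boxes T (fun k => prod_first n (fun i => hi k i - lo k i)) <= eps / 2 ^ S J).
  { intros J. assert (0 < eps / 2 ^ S J) by (apply Rdiv_lt_0_compat; [lra| apply pow_lt; lra]).
    destruct (H J _ H0) as (T & lo & hi & HJ). now exists (T, lo, hi). }
  apply functional_choice in Hcov as [F HF].
  set (T := fun J => fst (fst (F J))).
  set (LO := fun J => snd (fst (F J))).
  set (HI := fun J => snd (F J)).
  assert (HF' : forall J, (0 < T J)%nat /\ (forall k i, LO J k i <= HI J k i) /\
      (forall v, N J v -> exists k, (k < T J)%nat /\
                                    forall i, (i < n)%nat -> LO J k i <= v i <= HI J k i) /\
      sum_boxes (T J) (fun k => prod_first n (fun i => HI J k i - LO J k i)) <= eps / 2 ^ S J).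
  { intros J. specialize (HF J). unfold T, LO, HI. now destruct (F J) as [[? ?] ?]. }
  clear HF.
  assert (HT : forall j, (1 <= T j)%nat) by (intros j; destruct (HF' j); lia).
  set (box := fun (B : nat -> nat -> nat -> R) k i =>
    B (fst (block_locate T k)) (snd (block_locate T k)) i).
  exists (box LO), (box HI). split; [|split].
  - intros k i. apply (HF' _).
  - intros v [J HJ]. destruct (HF' J) as (_ & _ & Hc & _).
    destruct (Hc v HJ) as (l & Hl & Hb). exists (block_start T J + l)%nat.
    intros i Hi. unfold box. rewrite block_locate_start by auto. auto.
  - intros m.
    assert (Hvol : forall k, 0 <= prod_first n (fun i => box HI k i - box LO k i)).
    { intros k. apply prod_first_nonneg. intros i _. destruct (HF' (fst (block_locate T k))) as (_ & Hle & _).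
      unfold box. specialize (Hle (snd (block_locate T k)) i). lra. }
    apply Rle_trans with (sum_boxes (block_start T m) (fun k => prod_first n (fun i => box HI k i - box LO k i))).
    { apply sum_boxes_le_prefix; auto. apply block_start_from_ge; auto. }
    unfold box. rewrite (sum_boxes_blocks T HT (fun j l => prod_first n (fun i => HI j l i - LO j l i))).
    apply Rle_trans with (sum_boxes m (fun j => eps / 2 ^ S j)).
    + apply sum_boxes_le. intros k _. apply (HF' k).
    + rewrite sum_boxes_geometric.
      assert (0 < eps / 2 ^ m) by (apply Rdiv_lt_0_compat; [lra| apply pow_lt; lra]). lra.
Qed.

Lemma sqrt_sub_le A B rho : 0 < rho -> rho ^ 2 <= A -> A <= B ->
  0 <= sqrt B - sqrt A <= (B - A) / (2 * rho).
Proof.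
  intros Hr HA HB.
  assert (sA : sqrt A * sqrt A = A) by (apply sqrt_sqrt; nra).
  assert (sB : sqrt B * sqrt B = B) by (apply sqrt_sqrt; nra).
  assert (rA : rho <= sqrt A) by (rewrite <- (sqrt_pow2 rho) by lra; apply sqrt_le_1_alt; lra).
  assert (AB : sqrt A <= sqrt B) by (apply sqrt_le_1_alt; lra).
  split; [lra|].
  apply Rmult_le_reg_l with (2 * rho); [lra|].
  replace (2 * rho * ((B - A) / (2 * rho))) with (B - A) by (field; lra). nra.
Qed.

(* On [[rho, +oo)] the square root is [1/(2 rho)]-Lipschitz, so it shrinks box volumes by
   at most [(2 rho)^n]. *)
Lemma finite_null_square_preimage n (N : (nat -> R) -> Prop) rho : 0 < rho ->
  finite_null n N ->
  finite_null n (fun a => (forall i, (i < n)%nat -> rho <= a i) /\ N (fun i => a i ^ 2)).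
Proof.
  intros Hr HN eps Heps.
  assert (Hc : 0 < (2 * rho) ^ n) by (apply pow_lt; lra).
  destruct (HN (eps * (2 * rho) ^ n) ltac:(nra)) as (T & lo & hi & HT & Hle & Hcov & Hsum).
  set (root := fun b => sqrt (Rmax b (rho ^ 2))).
  exists T, (fun k i => root (lo k i)), (fun k i => root (hi k i)).
  split; [auto| split; [|split]].
  - intros k i. apply sqrt_le_1_alt. specialize (Hle k i). unfold Rmax; repeat destruct Rle_dec; lra.
  - intros a [Ha Hna]. destruct (Hcov _ Hna) as (k & Hk & Hb). exists k; split; auto.
    intros i Hi. specialize (Hb i Hi). specialize (Ha i Hi). simpl in Hb.
    rewrite <- (sqrt_pow2 (a i)) by lra. unfold root.
    split; apply sqrt_le_1_alt; unfold Rmax; destruct Rle_dec; nra.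
  - eapply Rle_trans.
    + apply sum_boxes_le. intros k _.
      apply (prod_first_le_scale n _ (fun i => hi k i - lo k i) (/ (2 * rho))).
      * apply Rlt_le, Rinv_0_lt_compat; lra.
      * intros i _. specialize (Hle k i).
        assert (H1 : rho ^ 2 <= Rmax (lo k i) (rho ^ 2)) by apply Rmax_r.
        assert (H2 : Rmax (lo k i) (rho ^ 2) <= Rmax (hi k i) (rho ^ 2))
          by (unfold Rmax; repeat destruct Rle_dec; lra).
        assert (H3 : Rmax (hi k i) (rho ^ 2) - Rmax (lo k i) (rho ^ 2) <= hi k i - lo k i)
          by (unfold Rmax; repeat destruct Rle_dec; lra).
        pose proof (sqrt_sub_le _ _ _ Hr H1 H2) as [H4 H5]. unfold root.
        split; [lra|]. eapply Rle_trans; [apply H5|]. unfold Rdiv. rewrite Rmult_comm.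
        apply Rmult_le_compat_l; [apply Rlt_le, Rinv_0_lt_compat|]; lra.
    + rewrite sum_boxes_scal, pow_inv.
      apply Rmult_le_reg_l with ((2 * rho) ^ n); auto.
      rewrite <- Rmult_assoc, Rinv_r, Rmult_1_l by lra. lra.
Qed.

Fixpoint digit (b d t : nat) : nat :=
  match t with O => Nat.modulo d b | S t' => digit b (Nat.div d b) t' end.

Lemma digit_lt b d t : (0 < b)%nat -> (digit b d t < b)%nat.
Proof. revert d; induction t; intros d Hb; simpl; [apply Nat.mod_upper_bound; lia| auto]. Qed.

Lemma digits_surjective b N (f : nat -> nat) : (0 < b)%nat ->
  (forall t, (t < N)%nat -> (f t < b)%nat) ->
  exists d, (d < b ^ N)%nat /\ forall t, (t < N)%nat -> digit b d t = f t.
Proof.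
  intros Hb. revert f. induction N; intros f Hf.
  - exists O. split; simpl; [lia| intros; lia].
  - destruct (IHN (fun t => f (S t))) as (d' & Hd' & Hdig); [intros; apply Hf; lia|].
    exists (f O + b * d')%nat. split.
    + simpl. specialize (Hf O ltac:(lia)). nia.
    + intros t Ht. destruct t; simpl.
      * rewrite Nat.mul_comm, Nat.Div0.mod_add. apply Nat.mod_small. apply Hf; lia.
      * rewrite Nat.mul_comm, Nat.add_comm, Nat.div_add_l by lia.
        rewrite Nat.div_small by (apply Hf; lia). rewrite Nat.add_0_r. apply Hdig; lia.
Qed.

Lemma grid_index_exists q h t : (1 <= q)%nat -> 0 < h -> 0 <= t <= INR q * h ->
  exists e, (e < q)%nat /\ INR e * h <= t <= (INR e + 1) * h.
Proof.
  intros Hq Hh. induction Hq; intros Ht.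
  - exists O. simpl in *. split; [lia| lra].
  - destruct (Rle_dec t (INR m * h)).
    + destruct IHHq as (e & He & Hb); [lra|]. exists e; split; [lia| auto].
    + exists m. split; [lia|]. rewrite S_INR in Ht. lra.
Qed.

Lemma argmax_exists n (f : nat -> R) : (0 < n)%nat ->
  exists j, (j < n)%nat /\ forall i, (i < n)%nat -> f i <= f j.
Proof.
  intros Hn. induction n; [lia|]. destruct n.
  - exists O. split; [lia|]. intros i Hi. replace i with O by lia. lra.
  - destruct IHn as (j & Hj & Hmax); [lia|].
    destruct (Rle_dec (f j) (f (S n))).
    + exists (S n). split; [lia|]. intros i Hi. destruct (Nat.eq_dec i (S n)); [subst; lra|].
      specialize (Hmax i ltac:(lia)); lra.
    + exists j. split; [lia|]. intros i Hi. destruct (Nat.eq_dec i (S n)); [subst; lra|].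
      apply Hmax; lia.
Qed.

Lemma pigeonhole {A : Type} M (l : list A) (f : A -> nat) :
  NoDup l -> (forall a, In a l -> (f a < M)%nat) -> (M < length l)%nat ->
  exists a b, In a l /\ In b l /\ a <> b /\ f a = f b.
Proof.
  intros Hnd Hf Hlen. apply NNPP. intros Hno.
  assert (Hnd2 : NoDup (map f l)).
  { apply NoDup_map_NoDup_ForallPairs; auto. intros a b Ha Hb Hab.
    apply NNPP; intros Hne. apply Hno. exists a, b; auto. }
  assert (Hinc : incl (map f l) (seq 0 M)).
  { intros c Hc. apply in_map_iff in Hc as (a & <- & Ha). apply in_seq. specialize (Hf a Ha). lia. }
  pose proof (NoDup_incl_length Hnd2 Hinc). rewrite length_map, length_seq in H. lia.
Qed.

Lemma Rabs_le_inv a b : Rabs a <= b -> - b <= a <= b.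
Proof. unfold Rabs; destruct Rcase_abs; lra. Qed.

Lemma nat_above r : 0 <= r -> exists N : nat, r <= INR N <= r + 1.
Proof.
  intros Hr. destruct (archimed r) as [H1 H2].
  assert (Hp : (0 < up r)%Z) by (apply lt_IZR; simpl; lra).
  exists (Z.to_nat (up r)). rewrite INR_IZR_INZ, Z2Nat.id by lia. lra.
Qed.

(** * Maps with infinite fibres *)

(* Points of [R^n] are the first [n] coordinates of a function [nat -> R]. *)
Definition in_cube n S (x : nat -> R) := forall i, (i < n)%nat -> 0 <= x i <= S.
Definition near_cube n S (x : nat -> R) := forall i, (i < n)%nat -> -1 <= x i <= S + 1.
Definition close n (x y : nat -> R) r := forall i, (i < n)%nat -> Rabs (x i - y i) <= r.
Definition supported n (x : nat -> R) := forall k, (n <= k)%nat -> x k = 0.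

Definition affine_approx n (G : (nat -> R) -> (nat -> R)) del eps p
    (Dp : (nat -> R) -> (nat -> R)) : Prop :=
  (forall c v i, Dp (fun k => c * v k) i = c * Dp v i) /\
  (forall y z r, close n y p del -> close n z p del -> close n y z r ->
     forall i, (i < n)%nat -> Rabs (G y i - G z i - Dp (fun k => y k - z k) i) <= eps * r).

Lemma near_cube_close n S x y r : in_cube n S x -> close n y x r -> r <= 1 -> near_cube n S y.
Proof.
  intros Hx Hc Hr i Hi. specialize (Hx i Hi). specialize (Hc i Hi).
  apply Rabs_le_inv in Hc. lra.
Qed.

Lemma close_refl n x r : 0 <= r -> close n x x r.
Proof. intros Hr k _. rewrite Rminus_diag, Rabs_R0. lra. Qed.

Lemma close_weaken n x y r r' : close n x y r -> r <= r' -> close n x y r'.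
Proof. intros H Hr k Hk. specialize (H k Hk). lra. Qed.

Lemma close_triangle n x y z r r' : close n x y r -> close n y z r' -> close n x z (r + r').
Proof.
  intros H H' k Hk. specialize (H k Hk). specialize (H' k Hk).
  replace (x k - z k) with ((x k - y k) + (y k - z k)) by ring.
  eapply Rle_trans; [apply Rabs_triang| lra].
Qed.

Lemma close_sym n x y r : close n x y r -> close n y x r.
Proof. intros H k Hk. rewrite Rabs_minus_sym. auto. Qed.

Lemma affine_approx_collision n G del eps x x' Dp r : 0 <= del ->
  affine_approx n G del eps x Dp -> close n x' x del -> close n x x' r ->
  (forall i, (i < n)%nat -> G x i = G x' i) ->
  forall i, (i < n)%nat -> Rabs (Dp (fun k => x k - x' k) i) <= eps * r.
Proof.
  intros Hdel [_ Happ] Hx'x Hr HGeq i Hi.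
  pose proof (Happ x x' r (close_refl n x del Hdel) Hx'x Hr i Hi) as H.
  now rewrite (HGeq i Hi), Rminus_diag, Rminus_0_l, Rabs_Ropp in H.
Qed.

Lemma slide_to_hyperplane n (u x z : nat -> R) j w : u j <> 0 ->
  (forall k, (k < n)%nat -> Rabs (u k) <= Rabs (u j)) -> Rabs (z j - x j) <= w ->
  exists tau, z j - tau * u j = x j /\ Rabs tau * Rabs (u j) <= w /\
    forall k, (k < n)%nat -> Rabs (tau * u k) <= w.
Proof.
  intros Huj Hmax Hzj.
  assert (Hu : 0 < Rabs (u j)) by (apply Rabs_pos_lt; exact Huj).
  exists ((z j - x j) / u j).
  assert (Htau : Rabs ((z j - x j) / u j) * Rabs (u j) = Rabs (z j - x j)).
  { unfold Rdiv. rewrite Rabs_mult, Rabs_inv. field. lra. }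
  split; [field; exact Huj| split; [lra|]].
  intros k Hk. specialize (Hmax k Hk). rewrite Rabs_mult.
  apply Rmult_le_reg_r with (Rabs (u j)); auto.
  apply Rle_trans with (Rabs ((z j - x j) / u j) * Rabs (u j) * Rabs (u j)).
  - rewrite Rmult_assoc, (Rmult_comm (Rabs (u k))), <- Rmult_assoc.
    apply Rmult_le_compat_l; [apply Rmult_le_pos; apply Rabs_pos| auto].
  - rewrite Htau. apply Rmult_le_compat_r; lra.
Qed.

(* Two distinct points [x, x'] with the same image force [Dp] to almost kill [u = x - x'];
   sliding [z] along [u] onto the hyperplane through [x] orthogonal to the largest coordinate
   [j] of [u] therefore changes [G z] by [O(eps w)]. *)
Lemma nearly_constant_direction n G eps del w x x' Dp : (0 < n)%nat ->
  0 < eps -> 0 < w -> 2 * w <= del -> affine_approx n G del eps x Dp ->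
  close n x' x w -> (exists i, (i < n)%nat /\ x i <> x' i) ->
  (forall i, (i < n)%nat -> G x i = G x' i) ->
  exists j, (j < n)%nat /\ forall z, close n z x w -> exists v,
    v j = x j /\ close n v x (2 * w) /\
    forall i, (i < n)%nat -> Rabs (G z i - G v i) <= 2 * eps * w.
Proof.
  intros Hn Heps Hw Hwd Hapx Hx'x [i0 [Hi0 Hne]] HGeq.
  set (u := fun k => x k - x' k).
  destruct (argmax_exists n (fun k => Rabs (u k)) Hn) as (j & Hj & Hmax).
  assert (Huj : u j <> 0).
  { intros E. specialize (Hmax i0 Hi0). rewrite E, Rabs_R0 in Hmax.
    assert (0 < Rabs (u i0)) by (apply Rabs_pos_lt; unfold u; lra). lra. }
  pose proof (affine_approx_collision n G del eps x x' Dp (Rabs (u j)) ltac:(lra) Hapx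
                (close_weaken _ _ _ w del Hx'x ltac:(lra)) (fun k Hk => Hmax k Hk) HGeq) as HDu.
  exists j. split; [exact Hj|]. intros z Hz.
  destruct (slide_to_hyperplane n u x z j w Huj Hmax (Hz j Hj)) as (tau & Hvj & Htau & Htu).
  set (v := fun k => z k - tau * u k).
  assert (Hzv : close n z v w).
  { intros k Hk. unfold v. replace (z k - (z k - tau * u k)) with (tau * u k) by ring. auto. }
  assert (Hvx : close n v x (2 * w)).
  { replace (2 * w) with (w + w) by ring. apply close_triangle with z; [now apply close_sym| exact Hz]. }
  exists v. split; [exact Hvj| split; [exact Hvx|]]. intros i Hi.
  destruct Hapx as [Hhom Happ].
  pose proof (Happ z v w (close_weaken _ _ _ w del Hz ltac:(lra))
                (close_weaken _ _ _ _ del Hvx Hwd) Hzv i Hi) as H.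
  assert (E : (fun k => z k - v k) = (fun k => tau * u k))
    by (apply functional_extensionality; intros k; unfold v; ring).
  rewrite E, Hhom in H.
  assert (Rabs (tau * Dp u i) <= eps * w).
  { rewrite Rabs_mult. specialize (HDu i Hi).
    apply Rle_trans with (Rabs tau * (eps * Rabs (u j))); [apply Rmult_le_compat_l; auto using Rabs_pos|].
    replace (Rabs tau * (eps * Rabs (u j))) with (eps * (Rabs tau * Rabs (u j))) by ring.
    apply Rmult_le_compat_l; lra. }
  replace (G z i - G v i) with ((G z i - G v i - tau * Dp u i) + tau * Dp u i) by ring.
  eapply Rle_trans; [apply Rabs_triang|]. lra.
Qed.

Definition skip_index (j k : nat) : nat := if Nat.ltb k j then k else (k - 1)%nat.

(* The centres of a grid of [q^(n-1)] cubes of side [4 w / q] tiling the slab of the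
   hyperplane [v j = x j] within distance [2 w] of [x]. *)
Definition grid_point (j q : nat) (w : R) (x : nat -> R) (d k : nat) : R :=
  if Nat.eqb k j then x j
  else x k - 2 * w + (INR (digit q d (skip_index j k)) + / 2) * (4 * w / INR q).

Lemma grid_point_close n j q w x d : (1 <= q)%nat -> 0 < w ->
  close n (grid_point j q w x d) x (2 * w).
Proof.
  intros Hq Hw k _. unfold grid_point. destruct (Nat.eqb_spec k j).
  - subst. rewrite Rminus_diag, Rabs_R0; lra.
  - pose proof (digit_lt q d (skip_index j k) ltac:(lia)) as Hd.
    assert (Hqpos : 0 < INR q) by (apply lt_0_INR; lia).
    assert (INR (digit q d (skip_index j k)) + 1 <= INR q) by (rewrite <- S_INR; apply le_INR; lia).
    pose proof (pos_INR (digit q d (skip_index j k))).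
    set (e := INR (digit q d (skip_index j k))) in *.
    replace (x k - 2 * w + (e + / 2) * (4 * w / INR q) - x k)
      with (2 * w * ((2 * e + 1) / INR q - 1)) by (field; lra).
    rewrite Rabs_mult, Rabs_right by lra.
    apply Rle_trans with (2 * w * 1); [apply Rmult_le_compat_l; [lra|]| lra].
    apply Rabs_le. split.
    + assert (0 <= (2 * e + 1) / INR q) by (apply Rmult_le_pos; [|apply Rlt_le, Rinv_0_lt_compat]; lra). lra.
    + assert ((2 * e + 1) / INR q <= 2) by (apply Rmult_le_reg_r with (INR q); auto;
        unfold Rdiv; rewrite Rmult_assoc, Rinv_l, Rmult_1_r by lra; lra). lra.
Qed.

Lemma hyperplane_grid_cover n j q w x v : (j < n)%nat -> (1 <= q)%nat -> 0 < w ->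
  v j = x j -> close n v x (2 * w) ->
  exists d, (d < q ^ (n - 1))%nat /\ close n v (grid_point j q w x d) (2 * w / INR q).
Proof.
  intros Hj Hq Hw Hvj Hvx.
  assert (Hqpos : 0 < INR q) by (apply lt_0_INR; lia).
  set (h := 4 * w / INR q).
  assert (Hh : 0 < h) by (apply Rdiv_lt_0_compat; lra).
  assert (Hqh : INR q * h = 4 * w) by (unfold h; field; lra).
  assert (Hcell : forall k, exists e, ((k < n)%nat /\ k <> j) ->
     (e < q)%nat /\ INR e * h <= v k - x k + 2 * w <= (INR e + 1) * h).
  { intros k. destruct (classic ((k < n)%nat /\ k <> j)) as [[Hk Hkj]|Hno].
    - destruct (grid_index_exists q h (v k - x k + 2 * w)) as (e & He & Hb); auto.
      + specialize (Hvx k Hk). apply Rabs_le_inv in Hvx. rewrite Hqh. lra.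
      + exists e; auto.
    - exists O; intros; contradiction. }
  apply functional_choice in Hcell as [e He].
  destruct (digits_surjective q (n - 1) (fun t => e (if Nat.ltb t j then t else S t)))
    as (d & Hd & Hdig); [lia| |].
  { intros t Ht. destruct (Nat.ltb_spec t j); apply He; lia. }
  exists d. split; [exact Hd|].
  intros k Hk. unfold grid_point. fold h. destruct (Nat.eqb_spec k j) as [->|Hkj].
  - rewrite Hvj, Rminus_diag, Rabs_R0. apply Rlt_le, Rdiv_lt_0_compat; lra.
  - assert (Hdk : digit q d (skip_index j k) = e k).
    { unfold skip_index. destruct (Nat.ltb_spec k j).
      - rewrite Hdig by lia. destruct (Nat.ltb_spec k j); [reflexivity| lia].
      - rewrite Hdig by lia. destruct (Nat.ltb_spec (k - 1) j); [lia|]. f_equal; lia. }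
    rewrite Hdk. destruct (He k (conj Hk Hkj)) as [_ Hb].
    replace (2 * w / INR q) with (h / 2) by (unfold h; field; lra).
    apply Rabs_le. split; nra.
Qed.

Section LocalCover.
Variables (n : nat) (Sz L : R) (G : (nat -> R) -> (nat -> R)).
Hypothesis n_pos : (0 < n)%nat.
Hypothesis L_nonneg : 0 <= L.
Hypothesis G_lipschitz : forall x y r, near_cube n Sz x -> near_cube n Sz y -> close n x y r ->
  forall i, (i < n)%nat -> Rabs (G x i - G y i) <= L * r.

(* Near a collision the image of a cube of side [2 w] lies in [q^(n-1)] boxes of side
   [O((1/q + eps) w)] instead of the [q^n] that a mere Lipschitz bound would give. *)
Lemma collision_image_cover eps del w q x x' Dp :
  0 < eps -> 0 < w -> 2 * w <= del -> del <= 1 -> (1 <= q)%nat -> in_cube n Sz x ->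
  affine_approx n G del eps x Dp ->
  close n x' x w -> (exists i, (i < n)%nat /\ x i <> x' i) ->
  (forall i, (i < n)%nat -> G x i = G x' i) ->
  exists blo bhi : nat -> nat -> R,
    (forall d i, blo d i <= bhi d i) /\
    (forall d, prod_first n (fun i => bhi d i - blo d i)
               <= (2 * (L * (2 * w / INR q) + 2 * eps * w)) ^ n) /\
    forall z, close n z x w -> exists d, (d < q ^ (n - 1))%nat /\
      forall i, (i < n)%nat -> blo d i <= G z i <= bhi d i.
Proof.
  intros Heps Hw Hwd Hd1 Hq HxK Hapx Hx'x Hne HGeq.
  destruct (nearly_constant_direction n G eps del w x x' Dp n_pos Heps Hw Hwd Hapx Hx'x Hne HGeq)
    as (j & Hj & Hproj).
  assert (Hqpos : 0 < INR q) by (apply lt_0_INR; lia).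
  set (rho := L * (2 * w / INR q) + 2 * eps * w).
  assert (Hrho : 0 <= rho).
  { unfold rho. assert (0 <= 2 * w / INR q) by (apply Rlt_le, Rdiv_lt_0_compat; lra). nra. }
  set (c := grid_point j q w x).
  exists (fun d i => G (c d) i - rho), (fun d i => G (c d) i + rho).
  split; [intros; lra| split].
  { intros d. apply prod_first_le_pow. intros i _. lra. }
  intros z Hz.
  destruct (Hproj z Hz) as (v & Hvj & Hvx & HGzv).
  destruct (hyperplane_grid_cover n j q w x v Hj Hq Hw Hvj Hvx) as (d & Hd & Hvc).
  exists d. split; [exact Hd|]. intros i Hi.
  assert (Hvc' : Rabs (G v i - G (c d) i) <= L * (2 * w / INR q)).
  { apply G_lipschitz; auto.
    - apply (near_cube_close n Sz x v (2 * w)); auto; lra.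
    - apply (near_cube_close n Sz x (c d) (2 * w)); [exact HxK| apply grid_point_close; auto| lra]. }
  specialize (HGzv i Hi).
  assert (Rabs (G z i - G (c d) i) <= rho).
  { replace (G z i - G (c d) i) with ((G z i - G v i) + (G v i - G (c d) i)) by ring.
    eapply Rle_trans; [apply Rabs_triang|]. unfold rho. lra. }
  apply Rabs_le_inv in H. lra.
Qed.
End LocalCover.

Lemma small_factor_exists C eps : 0 <= C -> 0 < eps -> exists ep, 0 < ep <= 1 /\ ep * C <= eps.
Proof.
  intros HC Heps. exists (Rmin 1 (eps / (C + 1))).
  assert (0 < eps / (C + 1)) by (apply Rdiv_lt_0_compat; lra).
  split; [split; [apply Rmin_pos; lra| apply Rmin_l]|].
  apply Rle_trans with (eps / (C + 1) * C); [apply Rmult_le_compat_r; [lra| apply Rmin_r]|].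
  apply Rmult_le_reg_r with (C + 1); [lra|]. unfold Rdiv. field_simplify; nra.
Qed.

Lemma nat_reciprocal_approx ep : 0 < ep <= 1 ->
  exists q : nat, (1 <= q)%nat /\ 1 / INR q <= ep /\ INR q * ep <= 2.
Proof.
  intros Hep.
  destruct (nat_above (1 / ep)) as (q & Hq1 & Hq2); [apply Rlt_le, Rdiv_lt_0_compat; lra|].
  assert (Hinv : 1 <= 1 / ep) by (apply Rmult_le_reg_r with ep; [lra|]; unfold Rdiv; field_simplify; lra).
  exists q. split; [apply INR_le; simpl; lra| split].
  - apply Rmult_le_reg_r with (INR q); [lra|]. unfold Rdiv. field_simplify; [|lra].
    apply Rmult_le_reg_r with (/ ep); [apply Rinv_0_lt_compat; lra|]. field_simplify; lra.
  - apply Rle_trans with ((1 / ep + 1) * ep); [apply Rmult_le_compat_r; lra|]. field_simplify; lra.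
Qed.

Lemma fine_grid_exists Sz del : 0 < Sz -> 0 < del ->
  exists m : nat, (0 < m)%nat /\ 2 * (Sz / INR m) <= del.
Proof.
  intros HSz Hdel.
  destruct (nat_above (2 * Sz / del)) as (m0 & Hm1 & _); [apply Rlt_le, Rdiv_lt_0_compat; lra|].
  assert (Hm : 0 < INR (S m0)) by (apply lt_0_INR; lia).
  exists (S m0). split; [lia|].
  apply Rmult_le_reg_r with (INR (S m0)); auto.
  replace (2 * (Sz / INR (S m0)) * INR (S m0)) with (2 * Sz) by (field; lra).
  assert (2 * Sz / del <= INR (S m0)) by (rewrite S_INR; lra).
  apply Rmult_le_compat_l with (r := del) in H; [|lra].
  replace (del * (2 * Sz / del)) with (2 * Sz) in H by (field; lra). lra.
Qed.

Lemma grid_volume_bound n m q Sz L ep : (0 < n)%nat -> (0 < m)%nat -> (1 <= q)%nat ->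
  0 < ep -> 0 < Sz -> 0 <= L -> 1 / INR q <= ep -> INR q * ep <= 2 ->
  INR (m ^ n * q ^ (n - 1)) *
    (2 * (L * (2 * (Sz / INR m) / INR q) + 2 * ep * (Sz / INR m))) ^ n
  <= ep * (2 ^ (n - 1) * (4 * Sz * (L + 1)) ^ n).
Proof.
  intros Hn Hm Hq Hep HSz HL Hqe Hqe2.
  assert (Hmpos : 0 < INR m) by (apply lt_0_INR; lia).
  assert (Hqpos : 0 < INR q) by (apply lt_0_INR; lia).
  set (w := Sz / INR m).
  assert (Hw : 0 < w) by (apply Rdiv_lt_0_compat; lra).
  assert (Hside : 0 <= 2 * (L * (2 * w / INR q) + 2 * ep * w) <= 4 * w * (L + 1) * ep).
  { assert (2 * w / INR q <= 2 * w * ep).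
    { replace (2 * w / INR q) with (2 * w * (1 / INR q)) by (field; lra).
      apply Rmult_le_compat_l; lra. }
    assert (0 <= 2 * w / INR q) by (apply Rlt_le, Rdiv_lt_0_compat; lra). nra. }
  apply Rle_trans with (INR (m ^ n * q ^ (n - 1)) * (4 * w * (L + 1) * ep) ^ n).
  { apply Rmult_le_compat_l; [apply pos_INR| apply pow_incr; exact Hside]. }
  rewrite mult_INR, !pow_INR.
  destruct n as [|n']; [lia|]. replace (S n' - 1)%nat with n' by lia.
  replace (INR m ^ S n' * INR q ^ n' * (4 * w * (L + 1) * ep) ^ S n')
    with ((INR q * ep) ^ n' * (ep * (4 * Sz * (L + 1)) ^ S n')).
  2:{ unfold w, Rdiv. rewrite !Rpow_mult_distr, pow_inv. cbn [pow]. field.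
        split; [apply pow_nonzero|]; lra. }
  replace (ep * (2 ^ n' * (4 * Sz * (L + 1)) ^ S n'))
    with (2 ^ n' * (ep * (4 * Sz * (L + 1)) ^ S n')) by ring.
  apply Rmult_le_compat_r; [apply Rmult_le_pos; [lra| apply pow_le; nra]|].
  apply pow_incr. split; [nra| lra].
Qed.

Definition infinite_fibre n Sz (G : (nat -> R) -> (nat -> R)) (y : nat -> R) : Prop :=
  forall l : list (nat -> R), exists x,
    in_cube n Sz x /\ supported n x /\ (forall i, (i < n)%nat -> G x i = y i) /\ ~ In x l.

Section InfiniteFibres.
Variables (n : nat) (Sz L : R) (G : (nat -> R) -> (nat -> R)).
Hypothesis n_pos : (0 < n)%nat.
Hypothesis L_nonneg : 0 <= L.
Hypothesis Sz_pos : 0 < Sz.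
Hypothesis G_lipschitz : forall x y r, near_cube n Sz x -> near_cube n Sz y -> close n x y r ->
  forall i, (i < n)%nat -> Rabs (G x i - G y i) <= L * r.
Hypothesis G_unif_diff : forall eps, 0 < eps -> exists del, 0 < del /\ del <= 1 /\
  forall p, in_cube n Sz p -> exists Dp, affine_approx n G del eps p Dp.

Definition in_cell m w c (z : nat -> R) : Prop :=
  forall i, (i < n)%nat -> INR (digit m c i) * w <= z i <= (INR (digit m c i) + 1) * w.

Definition collision m w c : Prop :=
  exists x x', in_cube n Sz x /\ in_cube n Sz x' /\ in_cell m w c x /\ in_cell m w c x' /\
    (exists i, (i < n)%nat /\ x i <> x' i) /\ (forall i, (i < n)%nat -> G x i = G x' i).

Lemma in_cell_close m w c x z : in_cell m w c x -> in_cell m w c z -> close n z x w.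
Proof.
  intros Hx Hz i Hi. specialize (Hx i Hi). specialize (Hz i Hi). apply Rabs_le. lra.
Qed.

Lemma cell_of_point m w x : (0 < m)%nat -> 0 < w -> in_cube n (INR m * w) x ->
  exists c, (c < m ^ n)%nat /\ in_cell m w c x.
Proof.
  intros Hm Hw Hx.
  assert (Hd : forall i, exists e, (i < n)%nat ->
    (e < m)%nat /\ INR e * w <= x i <= (INR e + 1) * w).
  { intros i. destruct (classic (i < n)%nat) as [Hi|Hi]; [|exists O; intros; contradiction].
    destruct (grid_index_exists m w (x i)) as (e & He1 & He2); [lia| auto| apply Hx; auto|].
    exists e; auto. }
  apply functional_choice in Hd as [e He].
  destruct (digits_surjective m n e Hm) as (c & Hc1 & Hc2); [intros; apply He; auto|].
  exists c. split; auto. intros i Hi. rewrite Hc2 by auto. apply He; auto.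
Qed.

(* Among [m^n + 1] preimages of [y], two share a cell. *)
Lemma infinite_fibre_collision m y : (0 < m)%nat -> infinite_fibre n Sz G y ->
  exists c x, (c < m ^ n)%nat /\ collision m (Sz / INR m) c /\ in_cell m (Sz / INR m) c x /\
    (forall i, (i < n)%nat -> G x i = y i).
Proof.
  intros Hm Hy.
  assert (Hmpos : 0 < INR m) by (apply lt_0_INR; lia).
  assert (Hlist : forall M, exists l, length l = M /\ NoDup l /\ forall x, In x l ->
      in_cube n Sz x /\ supported n x /\ (forall i, (i < n)%nat -> G x i = y i)).
  { induction M as [|M [l (Hl & Hnd & Hin)]].
    - exists nil. split; [reflexivity| split; [constructor| intros x []]].
    - destruct (Hy l) as (x & Hx1 & Hx2 & Hx3 & Hx4).
      exists (x :: l). split; [simpl; lia| split; [constructor; auto|]].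
      intros z [<-|Hz]; auto. }
  destruct (Hlist (S (m ^ n))) as (l & Hl & Hnd & Hin).
  set (w := Sz / INR m).
  assert (Hcode : forall x, exists c, In x l -> (c < m ^ n)%nat /\ in_cell m w c x).
  { intros x. destruct (classic (In x l)) as [Hx|Hx]; [|exists O; intros; contradiction].
    destruct (cell_of_point m w x) as (c & Hc); auto.
    - apply Rdiv_lt_0_compat; lra.
    - replace (INR m * w) with Sz by (unfold w; field; lra). apply Hin; auto.
    - exists c; auto. }
  apply functional_choice in Hcode as [f Hf].
  destruct (pigeonhole (m ^ n) l f Hnd) as (a & b & Ha & Hb & Hab & Hfab);
    [intros a Ha; apply Hf; auto| lia|].
  destruct (Hin a Ha) as (HaK & Hac & HaG). destruct (Hin b Hb) as (HbK & Hbc & HbG).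
  destruct (Hf a Ha) as (Hc & Hca). destruct (Hf b Hb) as (_ & Hcb). rewrite <- Hfab in Hcb.
  assert (Hne : exists i, (i < n)%nat /\ a i <> b i).
  { apply NNPP. intros Hno. apply Hab. apply functional_extensionality. intros k.
    destruct (Nat.lt_ge_cases k n).
    - apply NNPP. intros Hk. apply Hno. exists k; auto.
    - rewrite Hac, Hbc by auto. reflexivity. }
  exists (f a), a. split; [exact Hc| split; [|split; auto]].
  exists a, b. do 5 (split; [assumption|]). intros i Hi. now rewrite HaG, HbG.
Qed.

Lemma cell_image_cover eps del m q : 0 < eps -> 2 * (Sz / INR m) <= del -> del <= 1 ->
  (0 < m)%nat -> (1 <= q)%nat ->
  (forall p, in_cube n Sz p -> exists Dp, affine_approx n G del eps p Dp) ->
  forall c, exists blo bhi : nat -> nat -> R,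
    (forall d i, blo d i <= bhi d i) /\
    (forall d, prod_first n (fun i => bhi d i - blo d i)
       <= (2 * (L * (2 * (Sz / INR m) / INR q) + 2 * eps * (Sz / INR m))) ^ n) /\
    (collision m (Sz / INR m) c -> forall z, in_cell m (Sz / INR m) c z ->
       exists d, (d < q ^ (n - 1))%nat /\ forall i, (i < n)%nat -> blo d i <= G z i <= bhi d i).
Proof.
  intros Heps Hwd Hd1 Hm Hq HD c.
  assert (Hw : 0 < Sz / INR m) by (apply Rdiv_lt_0_compat; [lra| apply lt_0_INR; lia]).
  destruct (classic (collision m (Sz / INR m) c))
    as [(x & x' & HxK & Hx'K & Hxc & Hx'c & Hne & Heq)|Hno].
  - destruct (HD x HxK) as (Dp & Hapx).
    destruct (collision_image_cover n Sz L G n_pos L_nonneg G_lipschitz eps del (Sz / INR m) q x x' Dp)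
      as (blo & bhi & Hb1 & Hb2 & Hb3); auto.
    { apply (in_cell_close m _ c); auto. }
    exists blo, bhi. repeat split; auto.
    intros _ z Hz. apply Hb3. apply (in_cell_close m _ c); auto.
  - exists (fun _ _ => 0), (fun _ _ => 0). split; [intros; lra| split].
    + intros d. apply prod_first_le_pow. intros i _. split; [lra|].
      assert (0 <= 2 * (Sz / INR m) / INR q) by (apply Rlt_le, Rdiv_lt_0_compat; [lra| apply lt_0_INR; lia]).
      nra.
    + intros Hc; contradiction.
Qed.

Theorem finite_null_infinite_fibre : finite_null n (infinite_fibre n Sz G).
Proof.
  intros eps Heps.
  set (C := 2 ^ (n - 1) * (4 * Sz * (L + 1)) ^ n).
  assert (HC : 0 <= C) by (unfold C; apply Rmult_le_pos; apply pow_le; nra).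
  destruct (small_factor_exists C eps HC Heps) as (ep & Hep & HepC).
  destruct (G_unif_diff ep ltac:(lra)) as (del & Hd0 & Hd1 & HD).
  destruct (nat_reciprocal_approx ep Hep) as (q & Hq & Hqe & Hqe2).
  destruct (fine_grid_exists Sz del Sz_pos Hd0) as (m & Hm & Hwd).
  set (Qn := (q ^ (n - 1))%nat).
  assert (HQn : (0 < Qn)%nat) by (unfold Qn; apply Nat.neq_0_lt_0, Nat.pow_nonzero; lia).
  pose proof (cell_image_cover ep del m q ltac:(lra) Hwd Hd1 Hm Hq HD) as HF.
  apply functional_choice2 in HF as (blo & bhi & HF).
  exists (m ^ n * Qn)%nat, (fun k => blo (k / Qn)%nat (k mod Qn)%nat),
    (fun k => bhi (k / Qn)%nat (k mod Qn)%nat).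
  split; [apply Nat.mul_pos_pos; [apply Nat.neq_0_lt_0, Nat.pow_nonzero; lia| exact HQn]|].
  split; [|split].
  - intros k i. apply (HF (k / Qn)%nat).
  - intros y Hy.
    destruct (infinite_fibre_collision m y Hm Hy) as (c & x & Hc & Hcol & Hxc & HxG).
    destruct (proj2 (proj2 (HF c)) Hcol x Hxc) as (d & Hd & Hbox).
    exists (c * Qn + d)%nat. split; [nia|].
    rewrite Nat.div_add_l, Nat.div_small, Nat.add_0_r by lia.
    rewrite Nat.add_comm, Nat.Div0.mod_add, Nat.mod_small by lia.
    intros i Hi. rewrite <- (HxG i Hi). apply Hbox; auto.
  - eapply Rle_trans; [apply sum_boxes_le; intros k _; apply (HF (k / Qn)%nat)|].
    rewrite sum_boxes_const.
    apply Rle_trans with (ep * C); [|exact HepC].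
    apply grid_volume_bound; auto; lra.
Qed.
End InfiniteFibres.

(** * Squared chords of a C^1 curve *)

Lemma mean_value_bound (f f' : R -> R) a b K e :
  (forall c, Rmin a b <= c <= Rmax a b -> derivable_pt_lim f c (f' c)) ->
  (forall c, Rmin a b <= c <= Rmax a b -> Rabs (f' c - K) <= e) ->
  Rabs (f b - f a - K * (b - a)) <= e * Rabs (b - a).
Proof.
  intros Hd Hb.
  destruct (Rtotal_order a b) as [Hab|[Hab|Hab]].
  - rewrite Rmin_left, Rmax_right in * by lra.
    destruct (MVT_cor2 f f' a b Hab Hd) as (c & Hc & Hc2). rewrite Hc.
    replace (f' c * (b - a) - K * (b - a)) with ((f' c - K) * (b - a)) by ring.
    rewrite Rabs_mult. apply Rmult_le_compat_r; [apply Rabs_pos| apply Hb; lra].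
  - subst. replace (f b - f b - K * (b - b)) with 0 by ring. rewrite Rminus_diag, !Rabs_R0. lra.
  - rewrite Rmin_right, Rmax_left in * by lra.
    destruct (MVT_cor2 f f' b a Hab Hd) as (c & Hc & Hc2).
    replace (f b - f a - K * (b - a)) with (- ((f a - f b) - K * (a - b))) by ring.
    rewrite Hc, Rabs_Ropp.
    replace (f' c * (a - b) - K * (a - b)) with ((f' c - K) * (a - b)) by ring.
    rewrite Rabs_mult, (Rabs_minus_sym b a). apply Rmult_le_compat_r; [apply Rabs_pos| apply Hb; lra].
Qed.

Section Chords.
Variables (gx gy gx' gy' : R -> R).
Hypothesis gx_deriv : forall t, derivable_pt_lim gx t (gx' t).
Hypothesis gy_deriv : forall t, derivable_pt_lim gy t (gy' t).

Definition sq_chord t s := (gx t - gx s) ^ 2 + (gy t - gy s) ^ 2.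
(* The partial derivative of [sq_chord] in its first argument; by symmetry the one in the
   second argument is [sq_chord_dt s t]. *)
Definition sq_chord_dt t s := 2 * (gx t - gx s) * gx' t + 2 * (gy t - gy s) * gy' t.

Lemma sq_chord_sym t s : sq_chord t s = sq_chord s t.
Proof. unfold sq_chord. ring. Qed.

Lemma sq_chord_nonneg t s : 0 <= sq_chord t s.
Proof. unfold sq_chord. apply Rplus_le_le_0_compat; apply pow2_ge_0. Qed.

Lemma sq_chord_derivable t s : derivable_pt_lim (fun y => sq_chord y s) t (sq_chord_dt t s).
Proof.
  set (dx := minus_fct gx (fct_cte (gx s))). set (dy := minus_fct gy (fct_cte (gy s))).
  replace (fun y => sq_chord y s) with (plus_fct (mult_fct dx dx) (mult_fct dy dy))
    by (apply functional_extensionality; intros y;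
        unfold sq_chord, plus_fct, mult_fct, dx, dy, minus_fct, fct_cte; ring).
  replace (sq_chord_dt t s)
    with ((gx' t - 0) * dx t + dx t * (gx' t - 0) + ((gy' t - 0) * dy t + dy t * (gy' t - 0)))
    by (unfold sq_chord_dt, dx, dy, minus_fct, fct_cte; ring).
  apply derivable_pt_lim_plus; apply derivable_pt_lim_mult;
    apply derivable_pt_lim_minus; auto; apply derivable_pt_lim_const.
Qed.

Lemma sq_chord_continuous s : continuity (fun t => sq_chord t s).
Proof.
  intros t. apply derivable_continuous_pt. exists (sq_chord_dt t s). apply sq_chord_derivable.
Qed.

Section OnInterval.
Hypothesis gx'_cont : continuity gx'.
Hypothesis gy'_cont : continuity gy'.
Variables (A B : R).
Hypothesis A_le_B : A <= B.

Definition in_interval t := A <= t <= B.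

Definition unif_cont_on (f : R -> R) := forall e, 0 < e -> exists d, 0 < d /\
  forall a a0, in_interval a -> in_interval a0 -> Rabs (a - a0) <= d -> Rabs (f a - f a0) <= e.
Definition bounded_on (f : R -> R) M := 0 <= M /\ forall a, in_interval a -> Rabs (f a) <= M.

Lemma continuity_unif_cont_on f : continuity f -> unif_cont_on f.
Proof.
  intros Hc e He.
  destruct (Heine f (fun c => A <= c <= B) (compact_P3 A B) (fun x _ => Hc x) (mkposreal e He))
    as [d Hd].
  exists (d / 2). split; [destruct d; simpl; lra|].
  intros a a0 Ha Ha0 Haa. apply Rlt_le. apply (Hd a a0 Ha Ha0). destruct d; simpl in *; lra.
Qed.

Lemma continuity_bounded_on f : continuity f -> exists M, bounded_on f M.
Proof.
  intros Hc.
  destruct (continuity_ab_maj f A B A_le_B (fun c _ => Hc c)) as (M1 & HM1 & _).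
  destruct (continuity_ab_maj (fun t => - f t) A B A_le_B) as (M2 & HM2 & _).
  { intros c _. apply continuity_pt_opp. apply Hc. }
  pose proof (Rabs_pos (f M1)); pose proof (Rabs_pos (f M2)).
  exists (Rabs (f M1) + Rabs (f M2)). split; [lra|].
  intros a Ha. specialize (HM1 a Ha). specialize (HM2 a Ha).
  pose proof (Rle_abs (f M1)). pose proof (Rle_abs (- f M2)). rewrite Rabs_Ropp in H2.
  apply Rabs_le. lra.
Qed.

Lemma continuity_of_deriv f f' : (forall t, derivable_pt_lim f t (f' t)) -> continuity f.
Proof. intros Hd t. apply derivable_continuous_pt. exists (f' t). apply Hd. Qed.

Lemma in_interval_between a b c :
  in_interval a -> in_interval b -> Rmin a b <= c <= Rmax a b -> in_interval c.
Proof. unfold in_interval; intros. unfold Rmin, Rmax in *; repeat destruct Rle_dec; lra. Qed.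

Lemma between_close a b c a0 d : Rabs (a - a0) <= d -> Rabs (b - a0) <= d ->
  Rmin a b <= c <= Rmax a b -> Rabs (c - a0) <= d.
Proof.
  intros H1 H2 H3. apply Rabs_le_inv in H1. apply Rabs_le_inv in H2. apply Rabs_le.
  unfold Rmin, Rmax in *; repeat destruct Rle_dec; lra.
Qed.

Lemma unif_cont_chord_mul f h Mf Mh : unif_cont_on f -> bounded_on f Mf ->
  unif_cont_on h -> bounded_on h Mh ->
  forall e, 0 < e -> exists d, 0 < d /\ forall a b a0 b0,
    in_interval a -> in_interval b -> in_interval a0 -> in_interval b0 ->
    Rabs (a - a0) <= d -> Rabs (b - b0) <= d ->
    Rabs ((f a - f b) * h a - (f a0 - f b0) * h a0) <= e.
Proof.
  intros Uf [HMf Bf] Uh [HMh Bh] e He.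
  set (e1 := e / (2 * Mh + 2 * Mf + 1)).
  assert (He1 : 0 < e1) by (unfold e1; apply Rdiv_lt_0_compat; lra).
  destruct (Uf e1 He1) as (d1 & Hd1 & Hf). destruct (Uh e1 He1) as (d2 & Hd2 & Hh).
  exists (Rmin d1 d2). split; [apply Rmin_pos; auto|].
  intros a b a0 b0 Ha Hb Ha0 Hb0 Haa Hbb.
  pose proof (Rmin_l d1 d2); pose proof (Rmin_r d1 d2).
  assert (X1 : Rabs ((f a - f b) - (f a0 - f b0)) <= 2 * e1).
  { replace ((f a - f b) - (f a0 - f b0)) with ((f a - f a0) - (f b - f b0)) by ring.
    eapply Rle_trans; [apply Rabs_triang|]. rewrite Rabs_Ropp.
    assert (Rabs (f a - f a0) <= e1) by (apply Hf; auto; lra).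
    assert (Rabs (f b - f b0) <= e1) by (apply Hf; auto; lra). lra. }
  assert (X2 : Rabs (h a - h a0) <= e1) by (apply Hh; auto; lra).
  assert (X3 : Rabs (h a) <= Mh) by auto.
  assert (X4 : Rabs (f a0 - f b0) <= 2 * Mf).
  { eapply Rle_trans; [apply Rabs_triang|]. rewrite Rabs_Ropp.
    pose proof (Bf a0 Ha0); pose proof (Bf b0 Hb0); lra. }
  replace ((f a - f b) * h a - (f a0 - f b0) * h a0) with
    (((f a - f b) - (f a0 - f b0)) * h a + (f a0 - f b0) * (h a - h a0)) by ring.
  eapply Rle_trans; [apply Rabs_triang|]. rewrite !Rabs_mult.
  apply Rle_trans with (2 * e1 * Mh + 2 * Mf * e1).
  - apply Rplus_le_compat; apply Rmult_le_compat; auto using Rabs_pos.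
  - replace e with (e1 * (2 * Mh + 2 * Mf + 1)) by (unfold e1; field; lra). nra.
Qed.

Lemma sq_chord_dt_unif_cont : forall e, 0 < e -> exists d, 0 < d /\ forall a b a0 b0,
  in_interval a -> in_interval b -> in_interval a0 -> in_interval b0 ->
  Rabs (a - a0) <= d -> Rabs (b - b0) <= d -> Rabs (sq_chord_dt a b - sq_chord_dt a0 b0) <= e.
Proof.
  intros e He.
  pose proof (continuity_of_deriv gx gx' gx_deriv) as Cx.
  pose proof (continuity_of_deriv gy gy' gy_deriv) as Cy.
  destruct (continuity_bounded_on gx Cx) as [MX BX].
  destruct (continuity_bounded_on gy Cy) as [MY BY].
  destruct (continuity_bounded_on gx' gx'_cont) as [MX' BX'].
  destruct (continuity_bounded_on gy' gy'_cont) as [MY' BY'].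
  destruct (unif_cont_chord_mul gx gx' MX MX' (continuity_unif_cont_on gx Cx) BX
              (continuity_unif_cont_on gx' gx'_cont) BX' (e / 4) ltac:(lra)) as (d1 & Hd1 & H1).
  destruct (unif_cont_chord_mul gy gy' MY MY' (continuity_unif_cont_on gy Cy) BY
              (continuity_unif_cont_on gy' gy'_cont) BY' (e / 4) ltac:(lra)) as (d2 & Hd2 & H2).
  exists (Rmin d1 d2). split; [apply Rmin_pos; auto|].
  intros a b a0 b0 Ha Hb Ha0 Hb0 Haa Hbb.
  pose proof (Rmin_l d1 d2); pose proof (Rmin_r d1 d2).
  assert (Y1 := H1 a b a0 b0 Ha Hb Ha0 Hb0 ltac:(lra) ltac:(lra)).
  assert (Y2 := H2 a b a0 b0 Ha Hb Ha0 Hb0 ltac:(lra) ltac:(lra)).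
  unfold sq_chord_dt.
  replace (2 * (gx a - gx b) * gx' a + 2 * (gy a - gy b) * gy' a -
    (2 * (gx a0 - gx b0) * gx' a0 + 2 * (gy a0 - gy b0) * gy' a0)) with
    (2 * ((gx a - gx b) * gx' a - (gx a0 - gx b0) * gx' a0) +
     2 * ((gy a - gy b) * gy' a - (gy a0 - gy b0) * gy' a0)) by ring.
  eapply Rle_trans; [apply Rabs_triang|]. rewrite !Rabs_mult, Rabs_right by lra. lra.
Qed.

Lemma sq_chord_unif_diff : forall e, 0 < e -> exists d, 0 < d /\ forall t0 s0 t t' s s',
  in_interval t0 -> in_interval s0 -> in_interval t -> in_interval t' ->
  in_interval s -> in_interval s' ->
  Rabs (t - t0) <= d -> Rabs (t' - t0) <= d -> Rabs (s - s0) <= d -> Rabs (s' - s0) <= d ->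
  Rabs (sq_chord t s - sq_chord t' s' - sq_chord_dt t0 s0 * (t - t') - sq_chord_dt s0 t0 * (s - s'))
    <= e * (Rabs (t - t') + Rabs (s - s')).
Proof.
  intros e He. destruct (sq_chord_dt_unif_cont e He) as (d & Hd & HP).
  exists d. split; auto.
  intros t0 s0 t t' s s' Ht0 Hs0 Ht Ht' Hs Hs' H1 H2 H3 H4.
  assert (M1 : Rabs (sq_chord t s - sq_chord t' s - sq_chord_dt t0 s0 * (t - t')) <= e * Rabs (t - t')).
  { apply (mean_value_bound (fun y => sq_chord y s) (fun y => sq_chord_dt y s) t' t).
    - intros c _. apply sq_chord_derivable.
    - intros c Hc. apply HP; auto.
      + apply (in_interval_between t' t); auto.
      + apply (between_close t' t); auto. }
  assert (M2 : Rabs (sq_chord s t' - sq_chord s' t' - sq_chord_dt s0 t0 * (s - s')) <= e * Rabs (s - s')).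
  { apply (mean_value_bound (fun y => sq_chord y t') (fun y => sq_chord_dt y t') s' s).
    - intros c _. apply sq_chord_derivable.
    - intros c Hc. apply HP; auto.
      + apply (in_interval_between s' s); auto.
      + apply (between_close s' s); auto. }
  rewrite (sq_chord_sym s t'), (sq_chord_sym s' t') in M2.
  replace (sq_chord t s - sq_chord t' s' - sq_chord_dt t0 s0 * (t - t') - sq_chord_dt s0 t0 * (s - s'))
    with ((sq_chord t s - sq_chord t' s - sq_chord_dt t0 s0 * (t - t')) +
          (sq_chord t' s - sq_chord t' s' - sq_chord_dt s0 t0 * (s - s'))) by ring.
  eapply Rle_trans; [apply Rabs_triang|]. lra.
Qed.

Lemma sq_chord_lipschitz_bounded : exists LQ MQ, 0 <= LQ /\ 0 <= MQ /\
  (forall t s t' s', in_interval t -> in_interval s -> in_interval t' -> in_interval s' ->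
    Rabs (sq_chord t s - sq_chord t' s') <= LQ * (Rabs (t - t') + Rabs (s - s'))) /\
  (forall t s, in_interval t -> in_interval s -> Rabs (sq_chord t s) <= MQ).
Proof.
  destruct (continuity_bounded_on gx (continuity_of_deriv gx gx' gx_deriv)) as [MX [HX BX]].
  destruct (continuity_bounded_on gy (continuity_of_deriv gy gy' gy_deriv)) as [MY [HY BY]].
  destruct (continuity_bounded_on gx' gx'_cont) as [MX' [HX' BX']].
  destruct (continuity_bounded_on gy' gy'_cont) as [MY' [HY' BY']].
  assert (Hdiff : forall a b, in_interval a -> in_interval b ->
    Rabs (gx a - gx b) <= 2 * MX /\ Rabs (gy a - gy b) <= 2 * MY).
  { intros a b Ha Hb. split; (eapply Rle_trans; [apply Rabs_triang|]); rewrite Rabs_Ropp.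
    - pose proof (BX a Ha); pose proof (BX b Hb); lra.
    - pose proof (BY a Ha); pose proof (BY b Hb); lra. }
  set (MP := 4 * MX * MX' + 4 * MY * MY').
  assert (HP : forall a b, in_interval a -> in_interval b -> Rabs (sq_chord_dt a b) <= MP).
  { intros a b Ha Hb. destruct (Hdiff a b Ha Hb) as [Dx Dy].
    unfold sq_chord_dt, MP. eapply Rle_trans; [apply Rabs_triang|].
    rewrite !Rabs_mult, (Rabs_right 2) by lra.
    pose proof (BX' a Ha); pose proof (BY' a Ha).
    assert (Rabs (gx a - gx b) * Rabs (gx' a) <= 2 * MX * MX') by (apply Rmult_le_compat; auto using Rabs_pos).
    assert (Rabs (gy a - gy b) * Rabs (gy' a) <= 2 * MY * MY') by (apply Rmult_le_compat; auto using Rabs_pos).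
    lra. }
  exists MP, ((2 * MX) ^ 2 + (2 * MY) ^ 2). split; [unfold MP; nra| split; [nra| split]].
  - intros t s t' s' Ht Hs Ht' Hs'.
    assert (M1 : Rabs (sq_chord t s - sq_chord t' s - 0 * (t - t')) <= MP * Rabs (t - t')).
    { apply (mean_value_bound (fun y => sq_chord y s) (fun y => sq_chord_dt y s) t' t).
      - intros c _. apply sq_chord_derivable.
      - intros c Hc. rewrite Rminus_0_r. apply HP; auto. apply (in_interval_between t' t); auto. }
    assert (M2 : Rabs (sq_chord s t' - sq_chord s' t' - 0 * (s - s')) <= MP * Rabs (s - s')).
    { apply (mean_value_bound (fun y => sq_chord y t') (fun y => sq_chord_dt y t') s' s).
      - intros c _. apply sq_chord_derivable.
      - intros c Hc. rewrite Rminus_0_r. apply HP; auto. apply (in_interval_between s' s); auto. }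
    rewrite Rmult_0_l, Rminus_0_r in M1, M2.
    rewrite (sq_chord_sym s t'), (sq_chord_sym s' t') in M2.
    replace (sq_chord t s - sq_chord t' s')
      with ((sq_chord t s - sq_chord t' s) + (sq_chord t' s - sq_chord t' s')) by ring.
    eapply Rle_trans; [apply Rabs_triang|]. lra.
  - intros t s Ht Hs. destruct (Hdiff t s Ht Hs) as [Dx Dy].
    rewrite Rabs_right by (apply Rle_ge, sq_chord_nonneg). unfold sq_chord.
    rewrite <- (pow2_abs (gx t - gx s)), <- (pow2_abs (gy t - gy s)).
    apply Rplus_le_compat; apply pow_incr; split; auto using Rabs_pos.
Qed.
End OnInterval.
End Chords.

(** * The side-length map *)

(* A candidate polygon is encoded by [x = (sigma_1, ..., sigma_(n-1), mu)] with
   [mu = lambda^-2]; its vertex parameters are [0, sigma_1, ..., sigma_(n-1), 2 PI], and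
   [side_map] returns the squared scaled side lengths [a_i^2]. *)
Definition vertex_param (n : nat) (x : nat -> R) (k : nat) : R :=
  if Nat.eqb k 0 then 0 else if Nat.eqb k n then 2 * PI else x (k - 1)%nat.

Definition vertex_shift (n : nat) (v : nat -> R) (k : nat) : R :=
  if Nat.eqb k 0 then 0 else if Nat.eqb k n then 0 else v (k - 1)%nat.

Definition side_map gx gy (n : nat) (x : nat -> R) (i : nat) : R :=
  x (n - 1)%nat * sq_chord gx gy (vertex_param n x (S i)) (vertex_param n x i).

Lemma two_PI_bounds : 0 < 2 * PI <= 8.
Proof. pose proof PI_RGT_0; pose proof PI_4; lra. Qed.

Lemma vertex_param_near n Sz x k : near_cube n Sz x -> 8 <= Sz -> (k <= n)%nat ->
  -1 <= vertex_param n x k <= Sz + 1.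
Proof.
  intros Hx HS Hk. pose proof two_PI_bounds. unfold vertex_param.
  destruct (Nat.eqb_spec k 0); [lra|]. destruct (Nat.eqb_spec k n); [lra|]. apply Hx; lia.
Qed.

Lemma vertex_param_close n x y r k : close n x y r -> 0 <= r -> (k <= n)%nat ->
  Rabs (vertex_param n x k - vertex_param n y k) <= r.
Proof.
  intros Hc Hr Hk. unfold vertex_param.
  destruct (Nat.eqb_spec k 0); [rewrite Rminus_diag, Rabs_R0; lra|].
  destruct (Nat.eqb_spec k n); [rewrite Rminus_diag, Rabs_R0; lra|]. apply Hc; lia.
Qed.

Lemma vertex_shift_sub n x y k :
  vertex_shift n (fun k => x k - y k) k = vertex_param n x k - vertex_param n y k.
Proof. unfold vertex_shift, vertex_param. destruct (Nat.eqb k 0); [ring|]. destruct (Nat.eqb k n); ring. Qed.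

Lemma vertex_shift_scal n c v k : vertex_shift n (fun k => c * v k) k = c * vertex_shift n v k.
Proof. unfold vertex_shift. destruct (Nat.eqb k 0); [ring|]. destruct (Nat.eqb k n); ring. Qed.

Definition side_map_deriv gx gy gx' gy' (n : nat) (p v : nat -> R) (i : nat) : R :=
  v (n - 1)%nat * sq_chord gx gy (vertex_param n p (S i)) (vertex_param n p i) +
  p (n - 1)%nat *
    (sq_chord_dt gx gy gx' gy' (vertex_param n p (S i)) (vertex_param n p i) * vertex_shift n v (S i) +
     sq_chord_dt gx gy gx' gy' (vertex_param n p i) (vertex_param n p (S i)) * vertex_shift n v i).

Lemma product_increment_bound my mz mp Qy Qz Q0 dQ r del LQ eQ Sz :
  Rabs (my - mz) <= r -> Rabs (my - mp) <= del -> Rabs mp <= Sz ->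
  Rabs (Qz - Q0) <= LQ * (2 * del) -> Rabs (Qy - Qz) <= LQ * (2 * r) ->
  Rabs (Qy - Qz - dQ) <= eQ * (2 * r) ->
  Rabs (my * Qy - mz * Qz - ((my - mz) * Q0 + mp * dQ)) <= (4 * LQ * del + 2 * Sz * eQ) * r.
Proof.
  intros H1 H2 H3 E1 E2 E3.
  replace (my * Qy - mz * Qz - ((my - mz) * Q0 + mp * dQ))
    with ((my - mz) * (Qz - Q0) + (my - mp) * (Qy - Qz) + mp * (Qy - Qz - dQ)) by ring.
  eapply Rle_trans; [apply Rabs_triang|]. eapply Rle_trans; [apply Rplus_le_compat_r, Rabs_triang|].
  rewrite !Rabs_mult.
  apply Rle_trans with (r * (LQ * (2 * del)) + del * (LQ * (2 * r)) + Sz * (eQ * (2 * r))).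
  - repeat apply Rplus_le_compat; apply Rmult_le_compat; auto using Rabs_pos.
  - lra.
Qed.

Section SideMap.
Variables (gx gy gx' gy' : R -> R).
Hypothesis gx_deriv : forall t, derivable_pt_lim gx t (gx' t).
Hypothesis gy_deriv : forall t, derivable_pt_lim gy t (gy' t).
Hypothesis gx'_cont : continuity gx'.
Hypothesis gy'_cont : continuity gy'.
Variables (n : nat) (Sz : R).
Hypothesis n_pos : (1 <= n)%nat.
Hypothesis Sz_ge : 8 <= Sz.

Let Q := sq_chord gx gy.
Let vp := vertex_param n.

Lemma close_nonneg x y r : close n x y r -> 0 <= r.
Proof. intros H. specialize (H O ltac:(lia)). pose proof (Rabs_pos (x O - y O)). lra. Qed.

Lemma vertex_param_in_interval x k : near_cube n Sz x -> (k <= n)%nat ->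
  in_interval (-1) (Sz + 1) (vp x k).
Proof. intros Hx Hk. apply vertex_param_near; auto. Qed.

Lemma near_cube_last x : near_cube n Sz x -> Rabs (x (n - 1)%nat) <= Sz + 1.
Proof. intros Hx. specialize (Hx (n - 1)%nat ltac:(lia)). apply Rabs_le; lra. Qed.

Lemma side_map_lipschitz : exists L, 0 <= L /\
  forall x y r, near_cube n Sz x -> near_cube n Sz y -> close n x y r ->
    forall i, (i < n)%nat -> Rabs (side_map gx gy n x i - side_map gx gy n y i) <= L * r.
Proof.
  destruct (sq_chord_lipschitz_bounded gx gy gx' gy' gx_deriv gy_deriv gx'_cont gy'_cont
              (-1) (Sz + 1) ltac:(lra)) as (LQ & MQ & HLQ & HMQ & Hlip & Hbd).
  exists (MQ + 2 * (Sz + 1) * LQ). split; [nra|].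
  intros x y r Hx Hy Hxy i Hi. unfold side_map. fold Q vp.
  pose proof (close_nonneg _ _ _ Hxy) as Hr.
  set (Qx := Q (vp x (S i)) (vp x i)). set (Qy := Q (vp y (S i)) (vp y i)).
  assert (H1 : Rabs Qx <= MQ) by (apply Hbd; apply vertex_param_in_interval; auto; lia).
  assert (H2 : Rabs (Qx - Qy) <= LQ * (r + r)).
  { eapply Rle_trans; [apply Hlip; apply vertex_param_in_interval; auto; lia|].
    apply Rmult_le_compat_l; auto.
    apply Rplus_le_compat; apply vertex_param_close; auto; lia. }
  assert (H3 : Rabs (x (n - 1)%nat - y (n - 1)%nat) <= r) by (apply Hxy; lia).
  pose proof (near_cube_last y Hy).
  replace (x (n - 1)%nat * Qx - y (n - 1)%nat * Qy)
    with ((x (n - 1)%nat - y (n - 1)%nat) * Qx + y (n - 1)%nat * (Qx - Qy)) by ring.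
  eapply Rle_trans; [apply Rabs_triang|]. rewrite !Rabs_mult.
  apply Rle_trans with (r * MQ + (Sz + 1) * (LQ * (r + r))).
  - apply Rplus_le_compat; apply Rmult_le_compat; auto using Rabs_pos.
  - lra.
Qed.

Lemma side_map_deriv_scal p c v i :
  side_map_deriv gx gy gx' gy' n p (fun k => c * v k) i = c * side_map_deriv gx gy gx' gy' n p v i.
Proof. unfold side_map_deriv. rewrite !vertex_shift_scal. ring. Qed.

Lemma side_map_deriv_error LQ eQ dQ del p y z r i :
  0 <= LQ -> 0 <= eQ -> 0 < del <= 1 -> del <= dQ ->
  (forall t s t' s', in_interval (-1) (Sz + 1) t -> in_interval (-1) (Sz + 1) s ->
     in_interval (-1) (Sz + 1) t' -> in_interval (-1) (Sz + 1) s' ->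
     Rabs (Q t s - Q t' s') <= LQ * (Rabs (t - t') + Rabs (s - s'))) ->
  (forall t0 s0 t t' s s', in_interval (-1) (Sz + 1) t0 -> in_interval (-1) (Sz + 1) s0 ->
     in_interval (-1) (Sz + 1) t -> in_interval (-1) (Sz + 1) t' ->
     in_interval (-1) (Sz + 1) s -> in_interval (-1) (Sz + 1) s' ->
     Rabs (t - t0) <= dQ -> Rabs (t' - t0) <= dQ -> Rabs (s - s0) <= dQ -> Rabs (s' - s0) <= dQ ->
     Rabs (Q t s - Q t' s' - sq_chord_dt gx gy gx' gy' t0 s0 * (t - t') -
           sq_chord_dt gx gy gx' gy' s0 t0 * (s - s')) <= eQ * (Rabs (t - t') + Rabs (s - s'))) ->
  in_cube n Sz p -> close n y p del -> close n z p del -> close n y z r -> (i < n)%nat ->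
  Rabs (side_map gx gy n y i - side_map gx gy n z i -
        side_map_deriv gx gy gx' gy' n p (fun k => y k - z k) i) <= (4 * LQ * del + 2 * Sz * eQ) * r.
Proof.
  intros HLQ HeQ Hdel HdQ Hlip HQd Hp Hy Hz Hyz Hi.
  pose proof (close_nonneg _ _ _ Hyz) as Hr.
  assert (Hyn : near_cube n Sz y) by (apply (near_cube_close n Sz p y del); auto; lra).
  assert (Hzn : near_cube n Sz z) by (apply (near_cube_close n Sz p z del); auto; lra).
  assert (Hpn : near_cube n Sz p) by (apply (near_cube_close n Sz p p del); [auto| apply close_refl|]; lra).
  assert (Hint : forall x k, near_cube n Sz x -> (k <= n)%nat -> in_interval (-1) (Sz + 1) (vp x k))
    by (intros; apply vertex_param_in_interval; auto).
  assert (Hcl : forall x x' r', close n x x' r' -> 0 <= r' -> forall k, (k <= n)%nat ->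
    Rabs (vp x k - vp x' k) <= r') by (intros; apply vertex_param_close; auto).
  unfold side_map, side_map_deriv. rewrite !vertex_shift_sub. fold Q vp.
  apply product_increment_bound.
  - apply Hyz; lia.
  - apply Hy; lia.
  - specialize (Hp (n - 1)%nat ltac:(lia)). apply Rabs_le; lra.
  - eapply Rle_trans; [apply Hlip; apply Hint; auto; lia|].
    apply Rmult_le_compat_l; [lra|].
    replace (2 * del) with (del + del) by ring.
    apply Rplus_le_compat; (apply Hcl; [assumption| lra| lia]).
  - eapply Rle_trans; [apply Hlip; apply Hint; auto; lia|].
    apply Rmult_le_compat_l; [lra|].
    replace (2 * r) with (r + r) by ring.
    apply Rplus_le_compat; (apply Hcl; [assumption| lra| lia]).
  - assert (Hy' : close n y p dQ) by (apply close_weaken with del; auto).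
    assert (Hz' : close n z p dQ) by (apply close_weaken with del; auto).
    match goal with |- Rabs (?A - (?B + ?C)) <= _ => replace (A - (B + C)) with (A - B - C) by ring end.
    eapply Rle_trans; [apply HQd; try (apply Hint; auto; lia); (apply Hcl; [assumption| lra| lia])|].
    apply Rmult_le_compat_l; [lra|].
    replace (2 * r) with (r + r) by ring.
    apply Rplus_le_compat; (apply Hcl; [assumption| lra| lia]).
Qed.

Lemma side_map_unif_diff : forall eps, 0 < eps -> exists del, 0 < del /\ del <= 1 /\
  forall p, in_cube n Sz p -> exists Dp, affine_approx n (side_map gx gy n) del eps p Dp.
Proof.
  intros eps Heps.
  destruct (sq_chord_lipschitz_bounded gx gy gx' gy' gx_deriv gy_deriv gx'_cont gy'_cont
              (-1) (Sz + 1) ltac:(lra)) as (LQ & MQ & HLQ & HMQ & Hlip & _).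
  set (eQ := eps / (4 * Sz + 1)).
  assert (HeQ : 0 < eQ) by (unfold eQ; apply Rdiv_lt_0_compat; lra).
  destruct (sq_chord_unif_diff gx gy gx' gy' gx_deriv gy_deriv gx'_cont gy'_cont
              (-1) (Sz + 1) ltac:(lra) eQ HeQ) as (dQ & HdQ & HQd).
  set (del := Rmin 1 (Rmin dQ (eps / (8 * LQ + 1)))).
  assert (Hdel0 : 0 < del) by (unfold del; repeat apply Rmin_pos; try lra; apply Rdiv_lt_0_compat; lra).
  assert (Hdel1 : del <= 1) by apply Rmin_l.
  assert (Hdel2 : del <= dQ) by (unfold del; eapply Rle_trans; [apply Rmin_r| apply Rmin_l]).
  assert (Hdel3 : del <= eps / (8 * LQ + 1)) by (unfold del; eapply Rle_trans; [apply Rmin_r| apply Rmin_r]).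
  assert (Hconst : 4 * LQ * del + 2 * Sz * eQ <= eps).
  { assert (LQ * del <= eps / 8).
    { apply Rle_trans with (LQ * (eps / (8 * LQ + 1))); [apply Rmult_le_compat_l; auto|].
      apply Rmult_le_reg_r with (8 * LQ + 1); [lra|].
      replace (LQ * (eps / (8 * LQ + 1)) * (8 * LQ + 1)) with (LQ * eps) by (field; lra). nra. }
    assert (Sz * eQ <= eps / 4).
    { unfold eQ. apply Rmult_le_reg_r with (4 * Sz + 1); [lra|].
      replace (Sz * (eps / (4 * Sz + 1)) * (4 * Sz + 1)) with (Sz * eps) by (field; lra). nra. }
    lra. }
  exists del. split; [auto| split; [auto|]].
  intros p Hp. exists (side_map_deriv gx gy gx' gy' n p).
  split; [apply side_map_deriv_scal|].
  intros y z r Hy Hz Hyz i Hi.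
  eapply Rle_trans; [apply (side_map_deriv_error LQ eQ dQ del p y z r i); auto; lra|].
  apply Rmult_le_compat_r; [apply (close_nonneg _ _ _ Hyz)| exact Hconst].
Qed.
End SideMap.

(** * Neatly cyclic polygons have a scale bounded below *)

Lemma gdist_triangle gx gy s t u : gdist gx gy s u <= gdist gx gy s t + gdist gx gy t u.
Proof.
  assert (E : forall a b, gdist gx gy a b = dist_euc (gx a) (gy a) (gx b) (gy b)).
  { intros a b. unfold gdist, dist_euc, Rsqr. f_equal. ring. }
  rewrite !E. apply triangle.
Qed.

Lemma gdist_path_le gx gy (s : nat -> R) k :
  gdist gx gy (s k) (s O) <= sum_first k (fun i => gdist gx gy (s (S i)) (s i)).
Proof.
  induction k; simpl.
  - unfold gdist. rewrite !Rminus_diag. replace (0 ^ 2 + 0 ^ 2) with 0 by ring.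
    rewrite sqrt_0. lra.
  - eapply Rle_trans; [apply (gdist_triangle gx gy _ (s k))|]. lra.
Qed.

Lemma cauchy_schwarz_2d ex ey X Y :
  Rabs (ex * X + ey * Y) <= sqrt (ex ^ 2 + ey ^ 2) * sqrt (X ^ 2 + Y ^ 2).
Proof.
  rewrite <- sqrt_mult by (apply Rplus_le_le_0_compat; apply pow2_ge_0).
  rewrite <- (sqrt_pow2 (Rabs (ex * X + ey * Y))) by apply Rabs_pos.
  apply sqrt_le_1_alt. rewrite pow2_abs.
  assert (0 <= (ex * Y - ey * X) ^ 2) by apply pow2_ge_0. nra.
Qed.

Lemma sq_pos x : x <> 0 -> 0 < x ^ 2.
Proof. intros H. apply Rsqr_pos_lt in H. unfold Rsqr in H. simpl. lra. Qed.

Lemma near_tangent_chord ex ey X Y D om tau :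
  0 < ex ^ 2 + ey ^ 2 -> 0 <= D -> 0 <= tau <= 1 -> 0 <= om <= 1 ->
  om * (Rabs ex + Rabs ey + 1) <= tau * (ex ^ 2 + ey ^ 2) ->
  Rabs (X - ex * D) <= om * D -> Rabs (Y - ey * D) <= om * D ->
  sqrt (ex ^ 2 + ey ^ 2) * (1 - tau) * sqrt (X ^ 2 + Y ^ 2) <= (1 + tau) * (ex * X + ey * Y).
Proof.
  intros Hal2 HD Htau Hom Hsmall MX MY.
  set (al2 := ex ^ 2 + ey ^ 2) in *. set (al := sqrt al2).
  assert (Hal : 0 < al) by (apply sqrt_lt_R0; auto).
  assert (Halal : al * al = al2) by (apply sqrt_sqrt; lra).
  set (beta := Rabs ex + Rabs ey) in *.
  set (r1 := X - ex * D). set (r2 := Y - ey * D).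
  fold r1 in MX. fold r2 in MY.
  assert (E1 : Rabs (ex * r1) <= Rabs ex * (om * D))
    by (rewrite Rabs_mult; apply Rmult_le_compat_l; auto using Rabs_pos).
  assert (E2 : Rabs (ey * r2) <= Rabs ey * (om * D))
    by (rewrite Rabs_mult; apply Rmult_le_compat_l; auto using Rabs_pos).
  pose proof (Rle_abs (ex * r1)). pose proof (Rle_abs (- (ex * r1))). rewrite Rabs_Ropp in H0.
  pose proof (Rle_abs (ey * r2)). pose proof (Rle_abs (- (ey * r2))). rewrite Rabs_Ropp in H2.
  assert (R1 : r1 ^ 2 <= (om * D) ^ 2) by (rewrite <- (pow2_abs r1); apply pow_incr; auto using Rabs_pos).
  assert (R2 : r2 ^ 2 <= (om * D) ^ 2) by (rewrite <- (pow2_abs r2); apply pow_incr; auto using Rabs_pos).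
  assert (Hexa : Rabs ex ^ 2 = ex ^ 2) by apply pow2_abs.
  assert (Heya : Rabs ey ^ 2 = ey ^ 2) by apply pow2_abs.
  assert (Hbeta : 0 <= beta) by (unfold beta; pose proof (Rabs_pos ex); pose proof (Rabs_pos ey); lra).
  assert (Hlen : sqrt (X ^ 2 + Y ^ 2) <= al * (1 + tau) * D).
  { rewrite <- (sqrt_pow2 (al * (1 + tau) * D)) by (apply Rmult_le_pos; nra).
    apply sqrt_le_1_alt.
    replace X with (ex * D + r1) by (unfold r1; ring). replace Y with (ey * D + r2) by (unfold r2; ring).
    assert (om * om <= om) by nra.
    assert (Hb : om * beta * (D * D) + om * om * (D * D) <= tau * al2 * (D * D)).
    { assert (om * beta + om * om <= tau * al2) by nra. nra. }
    replace ((al * (1 + tau) * D) ^ 2) with (al2 * (1 + tau) ^ 2 * (D * D)) by (rewrite <- Halal; ring).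
    unfold beta in Hb. unfold al2 in *. nra. }
  assert (Hproj : al2 * (1 - tau) * D <= ex * X + ey * Y).
  { replace (ex * X + ey * Y) with (al2 * D + ex * r1 + ey * r2) by (unfold r1, r2, al2; ring).
    assert (om * beta <= tau * al2) by nra. unfold beta in H3. nra. }
  apply Rle_trans with (al * (1 - tau) * (al * (1 + tau) * D)).
  - apply Rmult_le_compat_l; auto. apply Rmult_le_pos; lra.
  - replace (al * (1 - tau) * (al * (1 + tau) * D)) with ((1 + tau) * (al2 * (1 - tau) * D))
      by (rewrite <- Halal; ring).
    apply Rmult_le_compat_l; lra.
Qed.

Lemma continuity_pt_ball f x0 : continuity_pt f x0 -> forall eps, 0 < eps -> exists d, 0 < d /\
  forall x, Rabs (x - x0) < d -> Rabs (f x - f x0) < eps.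
Proof.
  intros H eps He. destruct (H eps He) as [d [Hd Hx]]. exists d; split; auto.
  intros x Hxd. destruct (Req_dec x x0) as [->|Hne].
  - rewrite Rminus_diag, Rabs_R0; lra.
  - apply (Hx x). split; [split; [constructor| auto]| exact Hxd].
Qed.

Lemma curve_locally_straight gx gy gx' gy' t0 tau :
  (forall t, derivable_pt_lim gx t (gx' t)) -> (forall t, derivable_pt_lim gy t (gy' t)) ->
  continuity_pt gx' t0 -> continuity_pt gy' t0 -> 0 < gx' t0 ^ 2 + gy' t0 ^ 2 -> 0 < tau <= 1 ->
  exists eta, 0 < eta /\ forall u v, Rabs (u - t0) < eta -> Rabs (v - t0) < eta -> u <= v ->
    sqrt (gx' t0 ^ 2 + gy' t0 ^ 2) * (1 - tau) * gdist gx gy v u <=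
    (1 + tau) * (gx' t0 * (gx v - gx u) + gy' t0 * (gy v - gy u)).
Proof.
  intros Hdx Hdy Hcx Hcy Hal2 Htau.
  set (ex := gx' t0) in *. set (ey := gy' t0) in *.
  set (beta := Rabs ex + Rabs ey).
  assert (Hbeta : 0 <= beta) by (unfold beta; pose proof (Rabs_pos ex); pose proof (Rabs_pos ey); lra).
  set (om := Rmin 1 (tau * (ex ^ 2 + ey ^ 2) / (beta + 1))).
  assert (Hom0 : 0 < om) by (unfold om; apply Rmin_pos; [lra| apply Rdiv_lt_0_compat; nra]).
  assert (Hom1 : om <= 1) by apply Rmin_l.
  assert (Hom2 : om * (beta + 1) <= tau * (ex ^ 2 + ey ^ 2)).
  { assert (om <= tau * (ex ^ 2 + ey ^ 2) / (beta + 1)) by apply Rmin_r.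
    apply Rmult_le_compat_r with (r := beta + 1) in H; [|lra].
    unfold Rdiv in H. rewrite Rmult_assoc, Rinv_l, Rmult_1_r in H by lra. lra. }
  destruct (continuity_pt_ball gx' t0 Hcx om Hom0) as (d1 & Hd1 & Hcx0).
  destruct (continuity_pt_ball gy' t0 Hcy om Hom0) as (d2 & Hd2 & Hcy0).
  exists (Rmin d1 d2). split; [apply Rmin_pos; auto|].
  intros u v Hu Hv Huv.
  pose proof (Rmin_l d1 d2); pose proof (Rmin_r d1 d2).
  assert (Hbet : forall c, Rmin u v <= c <= Rmax u v -> Rabs (c - t0) < Rmin d1 d2).
  { intros c Hc. apply Rabs_def2 in Hu. apply Rabs_def2 in Hv. apply Rabs_def1;
      unfold Rmin, Rmax in Hc; repeat destruct Rle_dec; lra. }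
  assert (MX : Rabs (gx v - gx u - ex * (v - u)) <= om * (v - u)).
  { rewrite <- (Rabs_right (v - u)) at 2 by lra.
    apply (mean_value_bound gx gx' u v ex om); [intros c _; apply Hdx|].
    intros c Hc. apply Rlt_le, Hcx0. specialize (Hbet c Hc). lra. }
  assert (MY : Rabs (gy v - gy u - ey * (v - u)) <= om * (v - u)).
  { rewrite <- (Rabs_right (v - u)) at 2 by lra.
    apply (mean_value_bound gy gy' u v ey om); [intros c _; apply Hdy|].
    intros c Hc. apply Rlt_le, Hcy0. specialize (Hbet c Hc). lra. }
  apply (near_tangent_chord ex ey _ _ (v - u) om tau); auto; lra.
Qed.

(* The compact arc [gamma([eta, 2 PI - eta])] avoids [gamma(0)] by injectivity. *)
Lemma jordan_chord_gap gx gy gx' gy' eta : C1_jordan_param gx gy gx' gy' -> 0 < eta < PI ->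
  exists c, 0 < c /\ forall s, eta <= s <= 2 * PI - eta -> c <= gdist gx gy s 0.
Proof.
  intros (Hdx & Hdy & _ & _ & _ & _ & Hinj) Heta.
  destruct (continuity_ab_min (fun s => sq_chord gx gy s 0) eta (2 * PI - eta)) as (smin & Hmin & Hsmin).
  { lra. }
  { intros c _. apply (sq_chord_continuous gx gy gx' gy' Hdx Hdy). }
  exists (sqrt (sq_chord gx gy smin 0)). split.
  - apply sqrt_lt_R0. unfold sq_chord.
    destruct (Req_dec (gx smin - gx 0) 0) as [E1|E1].
    + destruct (Req_dec (gy smin - gy 0) 0) as [E2|E2].
      * exfalso. assert (smin = 0) by (apply Hinj; lra). lra.
      * pose proof (pow2_ge_0 (gx smin - gx 0)). pose proof (sq_pos _ E2). lra.
    + pose proof (pow2_ge_0 (gy smin - gy 0)). pose proof (sq_pos _ E1). lra.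
  - intros s Hs. apply sqrt_le_1_alt. exact (Hmin s Hs).
Qed.

Lemma first_crossing (P : nat -> Prop) N : ~ P O -> P N ->
  exists w, (w < N)%nat /\ ~ P w /\ P (S w).
Proof.
  induction N; intros H0 HN; [contradiction|].
  destruct (classic (P N)).
  - destruct (IHN H0 H) as (w & Hw & H1 & H2). exists w; split; [lia| auto].
  - exists N; split; [lia| auto].
Qed.

Lemma positive_lower_bound n (P : nat -> R) : (forall w, (w < n)%nat -> 0 < P w) ->
  exists k, 0 < k /\ forall w, (w < n)%nat -> k <= P w.
Proof.
  induction n; intros H.
  - exists 1. split; [lra| intros; lia].
  - destruct IHn as (k & Hk & Hk2); [intros; apply H; lia|].
    exists (Rmin k (P n)). split; [apply Rmin_pos; auto; apply H; lia|].
    intros w Hw. destruct (Nat.eq_dec w n); [subst; apply Rmin_r|].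
    eapply Rle_trans; [apply Rmin_l| apply Hk2; lia].
Qed.

Lemma in_W_margin n a : in_W n a ->
  exists kap, 0 < kap /\ forall w, (w < n)%nat -> (1 + kap) * a w <= sum_first n a - a w.
Proof.
  intros [Hapos Hatri].
  destruct (positive_lower_bound n (fun w => (sum_first n a - 2 * a w) / a w)) as (kap & Hkap & Hkap2).
  { intros w Hw. apply Rdiv_lt_0_compat; [| apply Hapos; auto]. specialize (Hatri w Hw). lra. }
  exists kap. split; [exact Hkap|]. intros w Hw.
  specialize (Hkap2 w Hw). specialize (Hapos w Hw).
  apply Rmult_le_compat_r with (r := a w) in Hkap2; [|lra].
  unfold Rdiv in Hkap2. rewrite Rmult_assoc, Rinv_l, Rmult_1_r in Hkap2 by lra. lra.
Qed.

(* In a closed polygon the projections [p i] of the sides onto a fixed direction sum to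
   zero, so if all sides but the [w]-th project almost fully in the positive direction the
   [w]-th side must be almost as long as all the others together. *)
Lemma closed_polygon_long_side n (a p : nat -> R) al lam tau w :
  (w < n)%nat -> 0 < al -> 0 < lam ->
  sum_first n p = 0 ->
  (forall i, (i < n)%nat -> i <> w -> al * (1 - tau) * (lam * a i) <= (1 + tau) * p i) ->
  - p w <= al * (lam * a w) -> -1 <= tau ->
  (1 - tau) * (sum_first n a - a w) <= (1 + tau) * a w.
Proof.
  intros Hw Hal Hlam Hsum Hgen Hpw Htau.
  set (c := al * (1 - tau) * lam).
  set (drop := fun (h : nat -> R) i => if Nat.eqb i w then 0 else h i).
  assert (Hfg : sum_first n (drop (fun i => c * a i)) <= sum_first n (drop (fun i => (1 + tau) * p i))).
  { apply sum_first_le. intros i Hi. unfold drop. destruct (Nat.eqb_spec i w); [lra|].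
    specialize (Hgen i Hi n0). unfold c. lra. }
  pose proof (sum_first_remove n (fun i => c * a i) w Hw) as Ef.
  pose proof (sum_first_remove n (fun i => (1 + tau) * p i) w Hw) as Eg.
  rewrite sum_first_scal in Ef, Eg. rewrite Hsum in Eg. unfold drop in Hfg; cbv beta in Hfg.
  assert (Hkey : al * lam * ((1 - tau) * (sum_first n a - a w)) <= al * lam * ((1 + tau) * a w)).
  { assert ((1 + tau) * - p w <= (1 + tau) * (al * (lam * a w))) by (apply Rmult_le_compat_l; lra).
    replace (al * lam * ((1 - tau) * (sum_first n a - a w))) with (c * sum_first n a - c * a w)
      by (unfold c; ring).
    replace (al * lam * ((1 + tau) * a w)) with ((1 + tau) * (al * (lam * a w))) by ring.
    lra. }
  apply Rmult_le_reg_l in Hkey; [exact Hkey| apply Rmult_lt_0_compat; lra].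
Qed.

Lemma straight_closed_polygon_long_side gx gy ex ey eta tau n (a : nat -> R) lam w (t : nat -> R) :
  0 < ex ^ 2 + ey ^ 2 -> 0 < lam -> 0 <= tau -> (w < n)%nat ->
  (forall u v, Rabs u < eta -> Rabs v < eta -> u <= v ->
     sqrt (ex ^ 2 + ey ^ 2) * (1 - tau) * gdist gx gy v u <=
     (1 + tau) * (ex * (gx v - gx u) + ey * (gy v - gy u))) ->
  t O = t n -> (forall k, (k <= n)%nat -> Rabs (t k) < eta) ->
  (forall i, (i < n)%nat -> gdist gx gy (t (S i)) (t i) = lam * a i) ->
  (forall i, (i < n)%nat -> i <> w -> t i <= t (S i)) ->
  (1 - tau) * (sum_first n a - a w) <= (1 + tau) * a w.
Proof.
  intros Hal2 Hlam Htau Hw Hstraight Hclosed Hsmall Hside Hfwd.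
  set (P := fun k => ex * gx (t k) + ey * gy (t k)).
  assert (HP : forall i, P (S i) - P i = ex * (gx (t (S i)) - gx (t i)) + ey * (gy (t (S i)) - gy (t i)))
    by (intros i; unfold P; ring).
  apply (closed_polygon_long_side n a (fun i => P (S i) - P i) (sqrt (ex ^ 2 + ey ^ 2)) lam tau w);
    auto; try lra.
  - apply sqrt_lt_R0; exact Hal2.
  - rewrite sum_first_telescope. unfold P. rewrite Hclosed. ring.
  - intros i Hi Hiw. rewrite <- (Hside i Hi), HP.
    apply Hstraight; [apply Hsmall; lia| apply Hsmall; lia| apply Hfwd; auto].
  - rewrite <- (Hside w Hw), HP. unfold gdist.
    eapply Rle_trans; [|apply cauchy_schwarz_2d]. rewrite <- Rabs_Ropp. apply Rle_abs.
Qed.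

Section NeatConfig.
Variables (gx gy : R -> R) (n : nat) (a : nat -> R) (sigma : list R) (lam : R).
Hypothesis config : neat_config gx gy n a sigma lam.

Lemma neat_config_param_mono i j : (i <= j)%nat -> (j <= n)%nat -> nth i sigma 0 <= nth j sigma 0.
Proof.
  destruct config as (_ & _ & _ & Hinc & _). intros Hij Hjn.
  induction Hij; [lra|]. specialize (Hinc m ltac:(lia)). specialize (IHHij ltac:(lia)). lra.
Qed.

Lemma neat_config_param_range k : (k <= n)%nat -> 0 <= nth k sigma 0 <= 2 * PI.
Proof.
  destruct config as (_ & Hs0 & Hsn & _). intros Hk. split.
  - rewrite <- Hs0 at 1. apply neat_config_param_mono; lia.
  - rewrite <- Hsn. apply neat_config_param_mono; lia.
Qed.

Lemma neat_config_vertex_dist k : (forall i, (i < n)%nat -> 0 <= a i) -> (k <= n)%nat ->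
  gdist gx gy (nth k sigma 0) 0 <= lam * sum_first n a.
Proof.
  destruct config as (_ & Hs0 & _ & _ & Hlam & Hside). intros Ha Hk.
  pose proof (gdist_path_le gx gy (fun k => nth k sigma 0) k) as Hpath. cbv beta in Hpath.
  rewrite Hs0 in Hpath. eapply Rle_trans; [exact Hpath|].
  apply Rle_trans with (sum_first k (fun i => lam * a i)).
  - apply sum_first_le. intros i Hi. rewrite Hside by lia. lra.
  - rewrite sum_first_scal. apply Rmult_le_compat_l; [lra|]. apply sum_first_le_prefix; auto.
Qed.

(* If no vertex lies on the arc [[eta, 2 PI - eta]], shifting the vertices after the first
   crossing by [- 2 PI] puts all of them in [(-eta, eta)]; the parameters then increase
   along every side except the crossing one, and the polygon still closes up. *)
Lemma neat_config_unwrap eta : 0 < eta < PI ->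
  (forall t, gx (t + 2 * PI) = gx t /\ gy (t + 2 * PI) = gy t) ->
  (forall k, (k <= n)%nat -> ~ (eta <= nth k sigma 0 <= 2 * PI - eta)) ->
  exists w t, (w < n)%nat /\ t O = t n /\
    (forall k, (k <= n)%nat -> Rabs (t k) < eta) /\
    (forall i, (i < n)%nat -> gdist gx gy (t (S i)) (t i) = lam * a i) /\
    (forall i, (i < n)%nat -> i <> w -> t i <= t (S i)).
Proof.
  intros Heta Hper Hfar.
  pose proof config as (_ & Hs0 & Hsn & Hinc & _ & Hside).
  set (s := fun k => nth k sigma 0) in *.
  assert (Hmono : forall i j, (i <= j)%nat -> (j <= n)%nat -> s i <= s j)
    by exact neat_config_param_mono.
  assert (Hrange : forall k, (k <= n)%nat -> 0 <= s k <= 2 * PI) by exact neat_config_param_range.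
  assert (Hout : forall k, (k <= n)%nat -> ~ (eta <= s k <= 2 * PI - eta)) by exact Hfar.
  destruct (first_crossing (fun k => eta <= s k) n) as (w & Hw & Hw1 & Hw2).
  { unfold s. rewrite Hs0; lra. }
  { unfold s. rewrite Hsn; lra. }
  assert (Hlow : forall k, (k <= w)%nat -> 0 <= s k < eta).
  { intros k Hk. split; [apply Hrange; lia|]. assert (s k <= s w) by (apply Hmono; lia). lra. }
  assert (Hhigh : forall k, (S w <= k)%nat -> (k <= n)%nat -> 2 * PI - eta < s k <= 2 * PI).
  { intros k Hk1 Hk2. assert (s (S w) <= s k) by (apply Hmono; lia).
    pose proof (Hout k Hk2). pose proof (Hrange k Hk2). split; [|lra].
    apply Rnot_le_lt. intros Hle. apply H0. lra. }
  set (t := fun k => if Nat.leb k w then s k else s k - 2 * PI).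
  assert (Hper' : forall k, gx (t k) = gx (s k) /\ gy (t k) = gy (s k)).
  { intros k. unfold t. destruct (Nat.leb k w); [auto|].
    destruct (Hper (s k - 2 * PI)) as [E1 E2].
    replace (s k - 2 * PI + 2 * PI) with (s k) in E1, E2 by ring. auto. }
  exists w, t. split; [exact Hw| split; [|split; [|split]]].
  - unfold t. rewrite (proj2 (Nat.leb_le 0 w)), (proj2 (Nat.leb_gt n w)) by lia.
    unfold s. rewrite Hs0, Hsn. ring.
  - intros k Hk. unfold t. destruct (Nat.leb_spec k w).
    + pose proof (Hlow k H). apply Rabs_def1; lra.
    + pose proof (Hhigh k ltac:(lia) Hk). apply Rabs_def1; lra.
  - intros i Hi. rewrite <- (Hside i Hi). unfold gdist.
    destruct (Hper' i) as [-> ->]. destruct (Hper' (S i)) as [-> ->]. reflexivity.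
  - intros i Hi Hiw. specialize (Hinc i Hi). change (s i < s (S i)) in Hinc. unfold t.
    destruct (Nat.leb_spec i w); destruct (Nat.leb_spec (S i) w); try lia; lra.
Qed.
End NeatConfig.

(* A small polygon keeps all its vertices near [gamma(0)], hence (by [jordan_chord_gap]) on
   the almost straight piece of the curve around [gamma(0)]; there all sides but one are
   traversed forward along the tangent, which contradicts the strict polygon inequality
   for the remaining side. *)
Theorem neat_scale_lower_bound gx gy gx' gy' n a :
  C1_jordan_param gx gy gx' gy' -> (1 <= n)%nat -> in_W n a ->
  exists Lam, 0 < Lam /\ forall sigma lam, neat_config gx gy n a sigma lam -> Lam <= lam.
Proof.
  intros HC Hn HW.
  pose proof HC as (Hdx & Hdy & Hcx & Hcy & Hnz & Hper & _).
  destruct (in_W_margin n a HW) as (kap & Hkap & Hmarg).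
  destruct HW as [Hapos _].
  set (Sig := sum_first n a) in *.
  assert (HSig : 0 < Sig).
  { specialize (Hmarg O ltac:(lia)). specialize (Hapos O ltac:(lia)). nra. }
  set (tau := Rmin (1 / 2) (kap / 8)).
  assert (Htau : 0 < tau <= 1 / 2) by (split; [apply Rmin_pos; lra| apply Rmin_l]).
  assert (Htau2 : tau <= kap / 8) by apply Rmin_r.
  set (ex := gx' 0) in *. set (ey := gy' 0) in *.
  assert (Hal2 : 0 < ex ^ 2 + ey ^ 2).
  { destruct (Hnz 0) as [H|H]; [change (ex <> 0) in H| change (ey <> 0) in H];
      pose proof (sq_pos _ H); pose proof (pow2_ge_0 ex); pose proof (pow2_ge_0 ey); lra. }
  destruct (curve_locally_straight gx gy gx' gy' 0 tau Hdx Hdy (Hcx 0) (Hcy 0) Hal2 ltac:(lra))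
    as (eta0 & Heta0 & Hstraight).
  set (eta := Rmin eta0 1).
  assert (Heta : 0 < eta <= 1) by (split; [apply Rmin_pos; lra| apply Rmin_r]).
  assert (Heta_le : eta <= eta0) by apply Rmin_l.
  assert (HPI : 2 < PI) by (pose proof PI2_1; lra).
  destruct (jordan_chord_gap gx gy gx' gy' eta HC ltac:(lra)) as (c & Hc & Hgap).
  exists (c / Sig). split; [apply Rdiv_lt_0_compat; auto|].
  intros sigma lam Hconf. apply Rnot_lt_le. intros Hsmall.
  pose proof Hconf as (_ & _ & _ & _ & Hlam & _).
  assert (HlSig : lam * Sig < c).
  { apply Rmult_lt_compat_r with (r := Sig) in Hsmall; auto.
    unfold Rdiv in Hsmall. rewrite Rmult_assoc, Rinv_l, Rmult_1_r in Hsmall by lra. lra. }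
  assert (Hfar : forall k, (k <= n)%nat -> ~ (eta <= nth k sigma 0 <= 2 * PI - eta)).
  { intros k Hk Hin. specialize (Hgap _ Hin).
    pose proof (neat_config_vertex_dist gx gy n a sigma lam Hconf k
                  (fun i Hi => Rlt_le _ _ (Hapos i Hi)) Hk) as Hd.
    fold Sig in Hd. lra. }
  destruct (neat_config_unwrap gx gy n a sigma lam Hconf eta ltac:(lra) Hper Hfar)
    as (w & t & Hw & Hclosed & Hsmall_t & Hside_t & Hfwd).
  pose proof (straight_closed_polygon_long_side gx gy ex ey eta tau n a lam w t Hal2 Hlam
                ltac:(lra) Hw) as Hlong.
  fold Sig in Hlong. specialize (Hlong ltac:(intros u v Hu Hv Huv; apply Hstraight;
    rewrite ?Rminus_0_r; lra) Hclosed Hsmall_t Hside_t Hfwd).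
  specialize (Hmarg w Hw). specialize (Hapos w Hw).
  assert ((1 - tau) * ((1 + kap) * a w) <= (1 - tau) * (Sig - a w)) by (apply Rmult_le_compat_l; lra).
  assert (0 < (kap - 2 * tau - tau * kap) * a w) by (apply Rmult_lt_0_compat; nra).
  nra.
Qed.

(** * Finiteness outside a null set *)

Definition decode_config (n : nat) (x : nat -> R) : list R * R :=
  (map (vertex_param n x) (seq 0 (S n)), / sqrt (x (n - 1)%nat)).

Lemma neat_config_encode gx gy n a sigma lam Sz : (1 <= n)%nat -> 8 <= Sz ->
  neat_config gx gy n a sigma lam -> / lam ^ 2 <= Sz ->
  exists x, in_cube n Sz x /\ supported n x /\
    (forall i, (i < n)%nat -> side_map gx gy n x i = a i ^ 2) /\ decode_config n x = (sigma, lam).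
Proof.
  intros Hn HSz Hconf Hlam2.
  pose proof Hconf as (Hlen & Hs0 & Hsn & _ & Hlam & Hside).
  set (s := fun k => nth k sigma 0) in *.
  assert (Hrange : forall k, (k <= n)%nat -> 0 <= s k <= 2 * PI)
    by exact (neat_config_param_range gx gy n a sigma lam Hconf).
  set (x := fun k => if Nat.ltb k (n - 1) then s (S k) else if Nat.eqb k (n - 1) then / lam ^ 2 else 0).
  assert (Hxn : x (n - 1)%nat = / lam ^ 2).
  { unfold x. rewrite (proj2 (Nat.ltb_ge _ _)), Nat.eqb_refl by lia. reflexivity. }
  assert (Hvp : forall k, (k <= n)%nat -> vertex_param n x k = s k).
  { intros k Hk. unfold vertex_param. destruct (Nat.eqb_spec k 0); [subst; auto|].
    destruct (Nat.eqb_spec k n); [subst; auto|]. unfold x. rewrite (proj2 (Nat.ltb_lt _ _)) by lia.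
    f_equal; lia. }
  exists x. split; [|split; [|split]].
  - intros k Hk. pose proof two_PI_bounds. unfold x. destruct (Nat.ltb_spec k (n - 1)).
    + pose proof (Hrange (S k) ltac:(lia)). lra.
    + rewrite (proj2 (Nat.eqb_eq k (n - 1))) by lia.
      split; [apply Rlt_le, Rinv_0_lt_compat, pow_lt; lra| lra].
  - intros k Hk. unfold x. rewrite (proj2 (Nat.ltb_ge _ _)), (proj2 (Nat.eqb_neq _ _)) by lia.
    reflexivity.
  - intros i Hi. unfold side_map. rewrite Hxn, !Hvp by lia.
    replace (sq_chord gx gy (s (S i)) (s i)) with ((lam * a i) ^ 2).
    + field. lra.
    + rewrite <- (Hside i Hi). unfold gdist, sq_chord. rewrite pow2_sqrt; auto.
      apply Rplus_le_le_0_compat; apply pow2_ge_0.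
  - unfold decode_config. f_equal.
    + apply (nth_ext _ _ 0 0); [rewrite length_map, length_seq; auto|].
      intros k Hk. rewrite length_map, length_seq in Hk.
      rewrite (nth_indep _ 0 (vertex_param n x 0)) by (rewrite length_map, length_seq; lia).
      rewrite map_nth, seq_nth by auto. simpl. apply Hvp. lia.
    + rewrite Hxn, sqrt_inv, sqrt_pow2 by lra. apply Rinv_inv.
Qed.

Definition exceptional_sides gx gy (n : nat) (a : nat -> R) : Prop :=
  exists J : nat, (forall i, (i < n)%nat -> / INR (S J) <= a i) /\
    infinite_fibre n (INR J + 8) (side_map gx gy n) (fun i => a i ^ 2).

Lemma exceptional_sides_null gx gy gx' gy' n : C1_jordan_param gx gy gx' gy' -> (1 <= n)%nat ->
  lebesgue_null n (exceptional_sides gx gy n).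
Proof.
  intros (Hdx & Hdy & Hcx & Hcy & _) Hn.
  apply lebesgue_null_countable_union. intros J.
  assert (HSz : 8 <= INR J + 8) by (pose proof (pos_INR J); lra).
  apply finite_null_square_preimage; [apply Rinv_0_lt_compat, lt_0_INR; lia|].
  destruct (side_map_lipschitz gx gy gx' gy' Hdx Hdy Hcx Hcy n _ Hn HSz) as (L & HL & HLip).
  apply (finite_null_infinite_fibre n _ L); [lia| exact HL| lra| exact HLip|].
  apply (side_map_unif_diff gx gy gx' gy'); auto.
Qed.

Lemma neat_configs_finite gx gy gx' gy' n a : C1_jordan_param gx gy gx' gy' -> (1 <= n)%nat ->
  in_W n a -> ~ exceptional_sides gx gy n a ->
  exists L : list (list R * R), forall sigma lam, neat_config gx gy n a sigma lam -> In (sigma, lam) L.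
Proof.
  intros HC Hn HW Hnex.
  destruct (neat_scale_lower_bound gx gy gx' gy' n a HC Hn HW) as (Lam & HLam & HLamb).
  destruct (positive_lower_bound n a (proj1 HW)) as (km & Hkm & Hk2).
  destruct (nat_above (Rmax (/ Lam ^ 2) (/ km))) as (J & HJ & _).
  { apply Rlt_le. eapply Rlt_le_trans; [|apply Rmax_r]. apply Rinv_0_lt_compat; auto. }
  assert (HJa : forall i, (i < n)%nat -> / INR (S J) <= a i).
  { intros i Hi. eapply Rle_trans; [|apply (Hk2 i Hi)].
    assert (/ km <= INR J) by (eapply Rle_trans; [apply Rmax_r| exact HJ]).
    rewrite S_INR, <- (Rinv_inv km). apply Rinv_le_contravar; [apply Rinv_0_lt_compat; auto| lra]. }
  assert (HJL : / Lam ^ 2 <= INR J) by (eapply Rle_trans; [apply Rmax_l| exact HJ]).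
  assert (Hfin : ~ infinite_fibre n (INR J + 8) (side_map gx gy n) (fun i => a i ^ 2))
    by (intros Hinf; apply Hnex; exists J; auto).
  apply not_all_ex_not in Hfin as [l Hl].
  exists (map (decode_config n) l).
  intros sigma lam Hconf.
  assert (Hlam2 : / lam ^ 2 <= INR J + 8).
  { pose proof (HLamb sigma lam Hconf). pose proof Hconf as (_ & _ & _ & _ & Hlam & _).
    assert (/ lam ^ 2 <= / Lam ^ 2)
      by (apply Rinv_le_contravar; [apply pow_lt; lra| apply pow_incr; lra]).
    lra. }
  destruct (neat_config_encode gx gy n a sigma lam (INR J + 8) Hn ltac:(pose proof (pos_INR J); lra)
              Hconf Hlam2) as (x & HxK & Hxs & HxG & Hdec).
  rewrite <- Hdec. apply in_map. apply NNPP. intros Hx. apply Hl. exists x. auto.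
Qed.

Theorem theorem1p6 :
  forall (gx gy gx' gy' : R -> R) (n : nat),
    C1_jordan_param gx gy gx' gy' ->
    (3 <= n)%nat ->
    exists N : (nat -> R) -> Prop,
      lebesgue_null n N /\
      forall a : nat -> R, in_W n a -> ~ N a ->
        exists L : list (list R * R),
          forall (sigma : list R) (lam : R),
            neat_config gx gy n a sigma lam -> In (sigma, lam) L.
Proof.
  intros gx gy gx' gy' n HC Hn.
  exists (exceptional_sides gx gy n). split.
  - apply (exceptional_sides_null gx gy gx' gy'); auto; lia.
  - intros a HW Hnex. apply (neat_configs_finite gx gy gx' gy'); auto; lia.
Qed.
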